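(* Let $m\ge1$ and let $Y^1,\dots,Y^m$ be independent copies of the photon-count process $Y=(Y_t)_{t=1}^T$ of an HTMM, and $Y^{(m)}_t=\sum_{k=1}^mY^k_t$. Assume $0<q_{00}<1$, $\theta_1>0$, that $p_{00},p_{10}$ have finite moment generating functions near $0$, and that $M=V\Lambda V^{-1}$ with $\Lambda=\mathrm{diag}(\lambda_0,\dots,\lambda_r)$, $\lambda_r=1$, column $r$ of $V$ equal to $e_r$. Define $\alpha_x,\alpha^0_x$ as below, and $$\mu_t=m\theta_1\sum_{x\in\mathcal S}\alpha_x\lambda_x^{t-1},\qquad \mu^0_t=m\theta_1\sum_{x\in\mathcal S}\alpha^0_x\lambda_x^{t-1}\quad(t\ge1).$$ Then $\mathbb E[Y^{(m)}_t]=\mu_t$ (and if $\nu_0<1$, $\mu_t=m\theta_1\sum_{x=0}^{r-1}(\nu_0\alpha^0_x+(1-\nu_0)\alpha^1_x)\lambda_x^{t-1}$), and the covariance $\Sigma_{tt'}=\mathrm{Cov}(Y^{(m)}_t,Y^{(m)}_{t'})$ is $$\Sigma_{tt}=\frac1m\big(m\theta_1(\theta_3+1)+m-\mu_t\big)\mu_t,$$ $$\Sigma_{tt'}=\frac1m\left[\Big(\theta_2-q_{00}\frac{1-\theta_2}{1-q_{00}}\Big)\mu^0_{t-t'}+\frac{1-\theta_2}{1-q_{00}}\mu^0_{t-t'+1}-\mu_t\right]\mu_{t'}\quad (1\le t'<t\le T).$$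
   Context: HTMM: fix $r\ge1$, $T\ge1$, $\mathcal S=\{0,\dots,r\}$; $q_{xz}\in[0,1]$ ($x\in\mathcal S$, $0\le z\le r-1$) with $\sum_xq_{xz}=1$; column-stochastic $M^\ell$ with column $0$ equal to $e_0$, column $r$ equal to $e_r$, $M^\ell_{xz}=q_{xz}$ for $1\le z\le r-1$; $M^s$ with column $0$ equal to $(q_{00},\dots,q_{r0})^{\mathrm T}$ and $M^s_{xz}=\delta_{xz}$ for $z\ge1$; $M=M^sM^\ell$. $p_{00},p_{10}$ are distributions on $\mathbb N_0$, $p_{x0}:=p_{10}$ for $x\ge1$, $p_{xx'}:=\delta_0$ for $x'\neq0$; $\nu$ a probability vector on $\mathcal S$. Joint law: $\mathbb P(X_0=x_0,X'_t=x'_t,X_t=x_t,Y_t=y_t,1\le t\le T)=\nu_{x_0}\prod_{t}M^\ell_{x'_tx_{t-1}}M^s_{x_tx'_t}p_{x_tx'_t}(y_t)$. Parameters: $\theta_1=\mathbb E[Y_t\mid X'_t=0]$, $\theta_2=q_{00}\mathbb E[Y_t\mid X'_t=X_t=0]/\theta_1$, $\theta_3=\mathrm{Var}[Y_t\mid X'_t=0]/\theta_1^2-1/\theta_1$. Coefficients: $\alpha_x=V_{0x}\frac{\lambda_x}{q_{00}}\sum_z(V^{-1})_{xz}\nu_z$, $\alpha^0_x=\frac{\lambda_x}{q_{00}}V_{0x}(V^{-1})_{x0}$, and for $\nu_0<1$, $\alpha^1_x=\frac{\lambda_x}{q_{00}}V_{0x}\sum_z(V^{-1})_{xz}\nu'_z$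 with $\nu'=\frac{1}{1-\nu_0}(0,\nu_1,\dots,\nu_r)$. Convention $0^0=1$. *)

From Stdlib Require Import Reals List Lia.
Open Scope R_scope.

Fixpoint rsum (n : nat) (f : nat -> R) : R :=
  match n with O => 0 | S k => rsum k f + f k end.
Fixpoint rprod (n : nat) (f : nat -> R) : R :=
  match n with O => 1 | S k => rprod k f * f k end.

Definition fsum {A : Type} (f : A -> R) (l : list A) : R :=
  fold_right (fun a s => f a + s) 0 l.

Definition has_sum {A : Type} (f : A -> R) (L : R) : Prop :=
  (exists B, forall l, NoDup l -> fsum (fun a => Rabs (f a)) l <= B) /\
  (forall eps, 0 < eps -> exists l0, NoDup l0 /\
     forall l, NoDup l -> incl l0 l -> Rabs (fsum f l - L) < eps).

(* ---------- minimal complex numbers (eigenvalues may be complex) ---------- *)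
Record Cx := mkC { Cre : R; Cim : R }.
Definition RtoC (a : R) : Cx := mkC a 0.
Definition Cadd (z w : Cx) : Cx := mkC (Cre z + Cre w) (Cim z + Cim w).
Definition Copp (z : Cx) : Cx := mkC (- Cre z) (- Cim z).
Definition Csub (z w : Cx) : Cx := Cadd z (Copp w).
Definition Cmul (z w : Cx) : Cx :=
  mkC (Cre z * Cre w - Cim z * Cim w) (Cre z * Cim w + Cim z * Cre w).
Fixpoint Cpow (z : Cx) (n : nat) : Cx :=
  match n with O => RtoC 1 | S k => Cmul (Cpow z k) z end.
Fixpoint csum (n : nat) (f : nat -> Cx) : Cx :=
  match n with O => RtoC 0 | S k => Cadd (csum k f) (f k) end.

Definition delta (i j : nat) : R := if Nat.eqb i j then 1 else 0.

(* q x z, x in {0..r}, z in {0..r-1} *)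
Definition Ml (q : nat -> nat -> R) (r : nat) (x z : nat) : R :=
  if Nat.eqb z 0%nat then delta x 0%nat
  else if Nat.eqb z r then delta x r
  else q x z.
Definition Ms (q : nat -> nat -> R) (x z : nat) : R :=
  if Nat.eqb z 0%nat then q x 0%nat else delta x z.
Definition Mfull (q : nat -> nat -> R) (r : nat) (x z : nat) : R :=
  rsum (S r) (fun y => Ms q x y * Ml q r y z).

Definition pem (p00 p10 : nat -> R) (x x' n : nat) : R :=
  if Nat.eqb x' 0%nat then (if Nat.eqb x 0%nat then p00 n else p10 n)
  else (if Nat.eqb n 0%nat then 1 else 0).

(* One copy: sx t = X_t (t = 0..T), sxp t = X'_t, sy t = Y_t (t = 1..T). *)
Record Sample := mkSample { sx : nat -> nat; sxp : nat -> nat; sy : nat -> nat }.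
Definition zeroS : Sample := mkSample (fun _ => 0%nat) (fun _ => 0%nat) (fun _ => 0%nat).

(* canonical representative: irrelevant coordinates are 0 *)
Definition canon1 (r T : nat) (s : Sample) : Prop :=
  (sx s 0%nat <= r)%nat /\ sxp s 0%nat = 0%nat /\ sy s 0%nat = 0%nat /\
  (forall t, (1 <= t <= T)%nat -> (sx s t <= r)%nat /\ (sxp s t <= r)%nat) /\
  (forall t, (T < t)%nat -> sx s t = 0%nat /\ sxp s t = 0%nat /\ sy s t = 0%nat).

Definition canon (r T m : nat) (w : nat -> Sample) : Prop :=
  (forall k, (k < m)%nat -> canon1 r T (w k)) /\ (forall k, (m <= k)%nat -> w k = zeroS).

Definition Omega (r T m : nat) : Type := { w : nat -> Sample | canon r T m w }.

Definition P1 (q : nat -> nat -> R) (nu : nat -> R) (p00 p10 : nat -> R)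
  (r T : nat) (s : Sample) : R :=
  nu (sx s 0%nat) * rprod T (fun i => let t := S i in
     Ml q r (sxp s t) (sx s (t - 1)%nat) * Ms q (sx s t) (sxp s t)
     * pem p00 p10 (sx s t) (sxp s t) (sy s t)).

Definition Pm (q : nat -> nat -> R) (nu : nat -> R) (p00 p10 : nat -> R)
  (r T m : nat) (w : Omega r T m) : R :=
  rprod m (fun k => P1 q nu p00 p10 r T (proj1_sig w k)).

Definition Ym {r T m : nat} (t : nat) (w : Omega r T m) : R :=
  rsum m (fun k => INR (sy (proj1_sig w k) t)).

(* e00, e10: first moments of p00, p10; f00, f10: second moments *)
Definition theta1 (q00 e00 e10 : R) : R := q00 * e00 + (1 - q00) * e10.
Definition theta2 (q00 e00 e10 : R) : R := q00 * e00 / theta1 q00 e00 e10.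
Definition theta3 (q00 e00 e10 f00 f10 : R) : R :=
  let th1 := theta1 q00 e00 e10 in
  (q00 * f00 + (1 - q00) * f10 - th1 ^ 2) / th1 ^ 2 - / th1.

Definition alpha (r : nat) (q00 : R) (nu : nat -> R) (V W : nat -> nat -> Cx)
  (lam : nat -> Cx) (x : nat) : Cx :=
  Cmul (Cmul (V 0%nat x) (Cmul (lam x) (RtoC (/ q00))))
       (csum (S r) (fun z => Cmul (W x z) (RtoC (nu z)))).
Definition alpha0 (q00 : R) (V W : nat -> nat -> Cx) (lam : nat -> Cx) (x : nat) : Cx :=
  Cmul (Cmul (lam x) (RtoC (/ q00))) (Cmul (V 0%nat x) (W x 0%nat)).
Definition nu' (nu : nat -> R) (z : nat) : R :=
  if Nat.eqb z 0%nat then 0 else nu z / (1 - nu 0%nat).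
Definition alpha1 (r : nat) (q00 : R) (nu : nat -> R) (V W : nat -> nat -> Cx)
  (lam : nat -> Cx) (x : nat) : Cx :=
  Cmul (Cmul (lam x) (RtoC (/ q00)))
       (Cmul (V 0%nat x) (csum (S r) (fun z => Cmul (W x z) (RtoC (nu' nu z))))).

Definition mu (r m : nat) (th1 q00 : R) (nu : nat -> R) (V W : nat -> nat -> Cx)
  (lam : nat -> Cx) (t : nat) : Cx :=
  Cmul (RtoC (INR m * th1))
       (csum (S r) (fun x => Cmul (alpha r q00 nu V W lam x) (Cpow (lam x) (t - 1)%nat))).
Definition mu0 (r m : nat) (th1 q00 : R) (V W : nat -> nat -> Cx)
  (lam : nat -> Cx) (t : nat) : Cx :=
  Cmul (RtoC (INR m * th1))
       (csum (S r) (fun x => Cmul (alpha0 q00 V W lam x) (Cpow (lam x) (t - 1)%nat))).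

(* A path of length T+1 is a path of length T together with one
   step (X'_{T+1}, X_{T+1}, Y_{T+1}).  Summing the path weight times a
   multiplicative observation weight [prod_t k_t(Y_t)] therefore obeys a
   forward recursion F_{T+1}(x) = sum_x' M^s_{x x'} K_{T+1}(x,x') (M^l F_T)(x').
   Choosing k_t(y) = y at one or two chosen times gives the first and second
   moments of the counts: between observation times F evolves by the matrix M,
   and at an observation time only X'_t = 0 contributes.  All moments are thus
   expressed through pi_u(n) = (M^n u)_0 / q00, the probability that X'_n = 0.

   m copies.  The sample space of m+1 copies is that of m copies times one
   copy; induction on m gives the mean and covariances of Y^(m).

   From M = V Lambda V^{-1} we get M^n = V Lambda^n V^{-1},
   which identifies mu_t and mu^0_t with m theta1 pi_nu(t) and m theta1 pi_e0(t);
   the main theorem is then an algebraic rearrangement. *)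
From Stdlib Require Import Reals List Lia.
From Stdlib Require Import Lra Permutation.
From Stdlib Require Import Classical ClassicalEpsilon FunctionalExtensionality ProofIrrelevance.
Open Scope R_scope.

Lemma fsum_app {A} (f : A -> R) l1 l2 : fsum f (l1 ++ l2) = fsum f l1 + fsum f l2.
Proof. induction l1; simpl; [ring | rewrite IHl1; ring]. Qed.

Lemma fsum_perm {A} (f : A -> R) l1 l2 : Permutation l1 l2 -> fsum f l1 = fsum f l2.
Proof. induction 1; simpl; lra. Qed.

Lemma fsum_ext_in {A} (f g : A -> R) l :
  (forall a, In a l -> f a = g a) -> fsum f l = fsum g l.
Proof. induction l; simpl; intros H; [reflexivity |]. rewrite H, IHl; auto. Qed.

Lemma fsum_plus {A} (f g : A -> R) l : fsum (fun a => f a + g a) l = fsum f l + fsum g l.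
Proof. induction l; simpl; [ring | rewrite IHl; ring]. Qed.

Lemma fsum_scal {A} (f : A -> R) c l : fsum (fun a => c * f a) l = c * fsum f l.
Proof. induction l; simpl; [ring | rewrite IHl; ring]. Qed.

Lemma fsum_map {A B} (f : B -> R) (h : A -> B) l :
  fsum f (map h l) = fsum (fun a => f (h a)) l.
Proof. induction l; simpl; [ring | rewrite IHl; ring]. Qed.

Lemma fsum_nonneg {A} (f : A -> R) l : (forall a, 0 <= f a) -> 0 <= fsum f l.
Proof. intros H; induction l; simpl; [lra | specialize (H a); lra]. Qed.

Lemma fsum_le {A} (f g : A -> R) l : (forall a, f a <= g a) -> fsum f l <= fsum g l.
Proof. intros H; induction l; simpl; [lra | specialize (H a); lra]. Qed.

Lemma fsum_incl_le {A} (g : A -> R) l l' :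
  (forall a, 0 <= g a) -> NoDup l -> incl l l' -> fsum g l <= fsum g l'.
Proof.
  intros Hg Hl; revert l'; induction Hl as [|a l Hna Hl IH]; intros l' Hi.
  - apply fsum_nonneg; auto.
  - assert (Ha : In a l') by (apply Hi; left; auto).
    destruct (in_split a l' Ha) as [l1 [l2 ->]].
    rewrite (fsum_perm g (l1 ++ a :: l2) (a :: l1 ++ l2))
      by (symmetry; apply Permutation_middle).
    simpl. enough (fsum g l <= fsum g (l1 ++ l2)) by lra.
    apply IH. intros b Hb.
    assert (Hb' : In b (l1 ++ a :: l2)) by (apply Hi; right; auto).
    apply in_app_or in Hb'. apply in_or_app.
    destruct Hb' as [H | [<- | H]]; auto; contradiction.
Qed.

Definition decP (P : Prop) : bool := if excluded_middle_informative P then true else false.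

Lemma decP_true (P : Prop) : decP P = true <-> P.
Proof. unfold decP; destruct (excluded_middle_informative P); split; auto; discriminate. Qed.

Lemma fsum_filter_split {A} (f : A -> R) (p : A -> bool) l :
  fsum f l = fsum f (filter p l) + fsum f (filter (fun a => negb (p a)) l).
Proof. induction l; simpl; [ring |]. destruct (p a); simpl; rewrite IHl; ring. Qed.

Lemma fsum_filter_zero {A} (f : A -> R) (p : A -> bool) l :
  (forall a, p a = false -> f a = 0) -> fsum f l = fsum f (filter p l).
Proof.
  intros H; induction l; simpl; [ring |].
  destruct (p a) eqn:E; simpl; rewrite IHl; auto. rewrite H; auto; ring.
Qed.

Lemma nodup_union {A} (l1 l2 : list A) :
  NoDup l1 -> exists l, NoDup l /\ incl l1 l /\ incl l2 l.
Proof.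
  intros H1; induction l2 as [|a l2 IH].
  - exists l1; repeat split; [auto | apply incl_refl | intros x []].
  - destruct IH as [l [Hn [Hi1 Hi2]]].
    destruct (classic (In a l)) as [Ha | Ha].
    + exists l; repeat split; auto. intros x [<- | Hx]; auto.
    + exists (a :: l); repeat split.
      * constructor; auto.
      * intros x Hx; right; auto.
      * intros x [<- | Hx]; [left | right]; auto.
Qed.

Lemma has_sum_approx {A} (f : A -> R) L eps :
  has_sum f L -> 0 < eps -> exists l, NoDup l /\ Rabs (fsum f l - L) < eps.
Proof.
  intros [_ H] He. destruct (H eps He) as [l0 [Hn Hc]].
  exists l0; split; auto. apply Hc; auto. apply incl_refl.
Qed.

Lemma has_sum_le {A} (f : A -> R) L l :
  has_sum f L -> (forall a, 0 <= f a) -> NoDup l -> fsum f l <= L.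
Proof.
  intros [_ H] Hf Hl. destruct (Rle_or_lt (fsum f l) L) as [| Hlt]; auto.
  destruct (H (fsum f l - L)) as [l0 [Hn0 Hc]]; [lra |].
  destruct (nodup_union l0 l Hn0) as [l' [Hn' [Hi1 Hi2]]].
  specialize (Hc l' Hn' Hi1). pose proof (fsum_incl_le f l l' Hf Hl Hi2).
  apply Rabs_def2 in Hc. lra.
Qed.

Lemma has_sum_ge0 {A} (f : A -> R) L : has_sum f L -> (forall a, 0 <= f a) -> 0 <= L.
Proof. intros H Hf. apply (has_sum_le f L nil H Hf). constructor. Qed.

Lemma has_sum_nonneg_intro {A} (f : A -> R) L :
  (forall a, 0 <= f a) ->
  (forall l, NoDup l -> fsum f l <= L) ->
  (forall eps, 0 < eps -> exists l, NoDup l /\ L - eps < fsum f l) -> has_sum f L.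
Proof.
  intros Hf Hu Hl. split.
  - exists L. intros l Hn. rewrite (fsum_ext_in _ f); [apply Hu; auto |].
    intros a _; apply Rabs_right; specialize (Hf a); lra.
  - intros eps He. destruct (Hl eps He) as [l0 [Hn0 H0]]. exists l0; split; auto.
    intros l Hn Hi. pose proof (fsum_incl_le f l0 l Hf Hn0 Hi). pose proof (Hu l Hn).
    apply Rabs_def1; lra.
Qed.

Lemma has_sum_ext {A} (f g : A -> R) L :
  (forall a, f a = g a) -> has_sum f L -> has_sum g L.
Proof. intros E H. replace g with f by (apply functional_extensionality; auto). exact H. Qed.

Lemma has_sum_eq {A} (f : A -> R) L L' : L = L' -> has_sum f L -> has_sum f L'.
Proof. intros ->; auto. Qed.

Lemma has_sum_plus {A} (f g : A -> R) a b :
  has_sum f a -> has_sum g b -> has_sum (fun x => f x + g x) (a + b).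
Proof.
  intros [[B1 HB1] H1] [[B2 HB2] H2]. split.
  - exists (B1 + B2). intros l Hl.
    eapply Rle_trans; [| apply Rplus_le_compat; [apply (HB1 l Hl) | apply (HB2 l Hl)]].
    rewrite <- fsum_plus. apply fsum_le. intros; apply Rabs_triang.
  - intros eps He. destruct (H1 (eps / 2)) as [l1 [Hn1 C1]]; [lra |].
    destruct (H2 (eps / 2)) as [l2 [Hn2 C2]]; [lra |].
    destruct (nodup_union l1 l2 Hn1) as [l0 [Hn [Hi1 Hi2]]].
    exists l0; split; auto. intros l Hl Hi.
    specialize (C1 l Hl (incl_tran Hi1 Hi)). specialize (C2 l Hl (incl_tran Hi2 Hi)).
    rewrite fsum_plus.
    replace (fsum f l + fsum g l - (a + b)) with ((fsum f l - a) + (fsum g l - b)) by ring.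
    eapply Rle_lt_trans; [apply Rabs_triang | lra].
Qed.

Lemma has_sum_scal {A} (f : A -> R) c L :
  has_sum f L -> has_sum (fun x => c * f x) (c * L).
Proof.
  intros [[B HB] H]. pose proof (Rabs_pos c) as Hc. split.
  - exists (Rabs c * B). intros l Hl.
    rewrite (fsum_ext_in _ (fun a => Rabs c * Rabs (f a))) by (intros; apply Rabs_mult).
    rewrite fsum_scal. apply Rmult_le_compat_l; auto.
  - intros eps He. destruct (H (eps / (Rabs c + 1))) as [l0 [Hn C]].
    { apply Rdiv_lt_0_compat; lra. }
    exists l0; split; auto. intros l Hl Hi. specialize (C l Hl Hi).
    rewrite fsum_scal. replace (c * fsum f l - c * L) with (c * (fsum f l - L)) by ring.
    rewrite Rabs_mult.
    apply Rle_lt_trans with (Rabs c * (eps / (Rabs c + 1))).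
    + apply Rmult_le_compat_l; lra.
    + apply Rlt_le_trans with ((Rabs c + 1) * (eps / (Rabs c + 1))).
      * apply Rmult_lt_compat_r; [apply Rdiv_lt_0_compat |]; lra.
      * right; field; lra.
Qed.

Lemma has_sum_scal_r {A} (f : A -> R) c L :
  has_sum f L -> has_sum (fun x => f x * c) (L * c).
Proof.
  intros H. apply (has_sum_ext (fun x => c * f x)); [intros; ring |].
  rewrite Rmult_comm. apply has_sum_scal; auto.
Qed.

Lemma has_sum_minus {A} (f g : A -> R) a b :
  has_sum f a -> has_sum g b -> has_sum (fun x => f x - g x) (a - b).
Proof.
  intros Hf Hg. apply (has_sum_ext (fun x => f x + (-1) * g x)); [intros; ring |].
  replace (a - b) with (a + (-1) * b) by ring.
  apply has_sum_plus; auto. apply has_sum_scal; auto.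
Qed.

Lemma has_sum_iso {A B} (f : A -> B) (g : B -> A) (h : B -> R) L :
  (forall a, g (f a) = a) -> (forall b, f (g b) = b) ->
  has_sum (fun a => h (f a)) L -> has_sum h L.
Proof.
  intros gf fg [[Bd HB] H].
  assert (Ng : forall l, NoDup l -> NoDup (map g l)).
  { intros l Hl. apply FinFun.Injective_map_NoDup; auto. intros x y E.
    rewrite <- (fg x), <- (fg y), E; auto. }
  assert (Eq : forall (k : B -> R) l, fsum k l = fsum (fun a => k (f a)) (map g l)).
  { intros k l. rewrite fsum_map. apply fsum_ext_in. intros; rewrite fg; auto. }
  split.
  - exists Bd. intros l Hl. rewrite Eq. apply HB; auto.
  - intros eps He. destruct (H eps He) as [l0 [Hn C]]. exists (map f l0). split.
    + apply FinFun.Injective_map_NoDup; auto. intros x y E.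
      rewrite <- (gf x), <- (gf y), E; auto.
    + intros l Hl Hi. rewrite Eq. apply C; auto. intros a Ha.
      assert (In (f a) l) by (apply Hi; apply in_map; auto).
      rewrite <- (gf a). apply in_map; auto.
Qed.

Lemma has_sum_support {A} (f : A -> R) l0 :
  NoDup l0 -> (forall a, f a <> 0 -> In a l0) -> has_sum f (fsum f l0).
Proof.
  intros Hn Hs. set (p := fun a => decP (In a l0)).
  assert (restrict : forall (k : A -> R), (forall a, f a = 0 -> k a = 0) ->
              forall l, fsum k l = fsum k (filter p l)).
  { intros k Hk l. apply fsum_filter_zero. intros a Ha. apply Hk.
    destruct (Req_dec (f a) 0) as [| Hne]; auto. apply Hs in Hne.
    apply decP_true in Hne. unfold p in Ha. congruence. }
  split.
  - exists (fsum (fun a => Rabs (f a)) l0). intros l Hl.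
    rewrite (restrict (fun a => Rabs (f a))) by (intros a E; rewrite E; apply Rabs_R0).
    apply fsum_incl_le; [intros; apply Rabs_pos | apply NoDup_filter; auto |].
    intros x Hx. apply filter_In in Hx. apply decP_true; tauto.
  - intros eps He. exists l0; split; auto. intros l Hl Hi.
    rewrite (restrict f) by auto.
    rewrite (fsum_perm f (filter p l) l0).
    + unfold Rminus; rewrite Rplus_opp_r, Rabs_R0; auto.
    + apply NoDup_Permutation; [apply NoDup_filter; auto | auto |].
      intros x; unfold p; rewrite filter_In, decP_true. split; [tauto |].
      intros Hx; split; auto.
Qed.

Section Tonelli.
Context {A B : Type} (f : A * B -> R) (g : A -> R).
Hypothesis f_nonneg : forall p, 0 <= f p.
Hypothesis slice_sum : forall a, has_sum (fun b => f (a, b)) (g a).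

Lemma fiber_bound a l : NoDup l -> fsum f (filter (fun p => decP (fst p = a)) l) <= g a.
Proof.
  intros Hl.
  set (fiber := filter (fun p => decP (fst p = a)) l).
  assert (Hall : forall p, In p fiber -> fst p = a).
  { intros p Hp. apply filter_In in Hp. apply decP_true; tauto. }
  assert (Hnd : NoDup fiber) by (apply NoDup_filter; auto).
  rewrite (fsum_ext_in f (fun p => f (a, snd p))).
  2:{ intros [x y] Hp. specialize (Hall _ Hp). simpl in Hall |- *. subst; reflexivity. }
  rewrite <- (fsum_map (fun b => f (a, b)) snd).
  apply has_sum_le; [apply slice_sum | intros; apply f_nonneg |].
  clear - Hnd Hall. induction Hnd as [|[x y] l0 Hq Hnd IH]; simpl; constructor.
  - intros Hin. apply in_map_iff in Hin. destruct Hin as [[x' y'] [E H']].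
    simpl in E; subst y'. apply Hq.
    assert (x = a) by (apply (Hall (x, y)); left; auto).
    assert (x' = a) by (apply (Hall (x', y)); right; auto).
    subst; exact H'.
  - apply IH; intros; apply Hall; right; auto.
Qed.

Lemma tonelli_upper n (l : list (A * B)) :
  (length l <= n)%nat -> NoDup l ->
  exists la, NoDup la /\ incl la (map fst l) /\ fsum f l <= fsum g la.
Proof.
  revert l; induction n as [|n IH]; intros l Hlen Hl.
  - destruct l; [| simpl in Hlen; lia].
    exists nil; simpl; split; [constructor | split; [intros x [] | lra]].
  - destruct l as [| [a b] l'] eqn:El.
    { exists nil; simpl; split; [constructor | split; [intros x [] | lra]]. }
    rewrite <- El in *.
    set (rest := filter (fun p => negb (decP (fst p = a))) l).
    assert (Hrest : NoDup rest) by (apply NoDup_filter; auto).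
    assert (Hlen2 : (length rest <= n)%nat).
    { unfold rest; subst l; simpl.
      replace (decP (a = a)) with true by (symmetry; apply decP_true; auto). simpl.
      pose proof (filter_length_le (fun p => negb (decP (fst p = a))) l').
      simpl in Hlen; lia. }
    destruct (IH _ Hlen2 Hrest) as [la [Hn [Hi Hs]]].
    assert (Hrest_fst : forall x, In x (map fst rest) -> In x (map fst l) /\ x <> a).
    { intros x Hx. apply in_map_iff in Hx. destruct Hx as [p [<- Hp]].
      unfold rest in Hp. apply filter_In in Hp. destruct Hp as [Hp Hna].
      split; [apply in_map; auto |]. intros E.
      apply (proj2 (decP_true _)) in E. rewrite E in Hna. discriminate. }
    exists (a :: la). split; [| split].
    + constructor; auto. intros Ha. apply (Hrest_fst a (Hi a Ha)). reflexivity.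
    + intros x [<- | Hx]; [subst l; left; auto | apply (Hrest_fst x (Hi x Hx))].
    + rewrite (fsum_filter_split f (fun p => decP (fst p = a)) l). fold rest.
      pose proof (fiber_bound a l Hl). simpl fsum at 3. lra.
Qed.

Lemma tonelli_lower d (la : list A) :
  0 < d -> NoDup la ->
  exists l, NoDup l /\ incl (map fst l) la /\ fsum g la - INR (length la) * d <= fsum f l.
Proof.
  intros Hd Hla. induction Hla as [|a la Ha Hla IH].
  - exists nil; simpl; split; [constructor | split; [intros x [] | lra]].
  - destruct IH as [l [Hn [Hi Hs]]].
    destruct (has_sum_approx _ _ d (slice_sum a) Hd) as [lb [Hnb Hb]].
    exists (map (pair a) lb ++ l). split; [| split].
    + apply NoDup_app; auto.
      * apply FinFun.Injective_map_NoDup; auto. intros x y E; inversion E; auto.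
      * intros p Hp Hp'. apply in_map_iff in Hp. destruct Hp as [y [<- _]].
        apply Ha, Hi. change a with (fst (a, y)). apply in_map; auto.
    + rewrite map_app, map_map. intros x Hx. apply in_app_or in Hx.
      destruct Hx as [Hx | Hx]; [| right; auto].
      apply in_map_iff in Hx. destruct Hx as [y [<- _]]. left; auto.
    + rewrite fsum_app, fsum_map. simpl length. rewrite S_INR. simpl.
      apply Rabs_def2 in Hb. lra.
Qed.

Theorem tonelli L : has_sum g L -> has_sum f L.
Proof.
  intros HL.
  assert (Hg0 : forall a, 0 <= g a)
    by (intros a; apply (has_sum_ge0 _ _ (slice_sum a)); intros; apply f_nonneg).
  apply has_sum_nonneg_intro; [exact f_nonneg | |].
  - intros l Hl. destruct (tonelli_upper (length l) l (le_n _) Hl) as [la [Hn [_ Hs]]].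
    pose proof (has_sum_le g L la HL Hg0 Hn). lra.
  - intros eps He. destruct (has_sum_approx g L (eps / 2) HL) as [la [Hn Hs]]; [lra |].
    pose proof (pos_INR (length la)) as Hlen.
    set (d := eps / 2 / (INR (length la) + 1)).
    assert (Hd : 0 < d) by (apply Rdiv_lt_0_compat; lra).
    destruct (tonelli_lower d la Hd Hn) as [l [Hl [_ Hl2]]].
    exists l; split; auto. apply Rabs_def2 in Hs.
    assert (INR (length la) * d < eps / 2).
    { replace (eps / 2) with ((INR (length la) + 1) * d) by (unfold d; field; lra).
      lra. }
    lra.
Qed.
End Tonelli.

Lemma has_sum_prod {A B} (f : A -> R) (g : B -> R) a b :
  (forall x, 0 <= f x) -> (forall y, 0 <= g y) -> has_sum f a -> has_sum g b ->
  has_sum (fun p : A * B => f (fst p) * g (snd p)) (a * b).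
Proof.
  intros Hf Hg Ha Hb. apply (tonelli _ (fun x => f x * b)).
  - intros [x y]; simpl; apply Rmult_le_pos; auto.
  - intros x; simpl. apply has_sum_scal; auto.
  - apply has_sum_scal_r; auto.
Qed.

Lemma rsum_ext n f g : (forall i, (i < n)%nat -> f i = g i) -> rsum n f = rsum n g.
Proof. induction n; simpl; intros H; auto. rewrite IHn, H; auto. Qed.

Lemma rsum_plus n f g : rsum n (fun i => f i + g i) = rsum n f + rsum n g.
Proof. induction n; simpl; [ring | rewrite IHn; ring]. Qed.

Lemma rsum_scal n c f : rsum n (fun i => c * f i) = c * rsum n f.
Proof. induction n; simpl; [ring | rewrite IHn; ring]. Qed.

Lemma rsum_scal_r n c f : rsum n (fun i => f i * c) = rsum n f * c.
Proof. induction n; simpl; [ring | rewrite IHn; ring]. Qed.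

Lemma rsum_zero n f : (forall i, (i < n)%nat -> f i = 0) -> rsum n f = 0.
Proof. induction n; simpl; intros H; auto. rewrite IHn, H; auto; ring. Qed.

Lemma rsum_swap n m f :
  rsum n (fun i => rsum m (fun j => f i j)) = rsum m (fun j => rsum n (fun i => f i j)).
Proof. induction n; simpl. { rewrite rsum_zero; auto. } rewrite IHn, <- rsum_plus; auto. Qed.

Lemma rsum_first n f : rsum (S n) f = f O + rsum n (fun i => f (S i)).
Proof. induction n; simpl in *; [ring | rewrite IHn; ring]. Qed.

Lemma rsum_single n j f :
  (j < n)%nat -> (forall i, (i < n)%nat -> i <> j -> f i = 0) -> rsum n f = f j.
Proof.
  induction n; intros Hj H; [lia |]. simpl. destruct (Nat.eq_dec j n) as [-> | Hne].
  - rewrite rsum_zero; [ring |]. intros; apply H; lia.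
  - rewrite IHn, (H n); [ring | lia | lia | lia | intros; apply H; lia].
Qed.

Lemma rsum_nonneg n f : (forall i, (i < n)%nat -> 0 <= f i) -> 0 <= rsum n f.
Proof.
  induction n; simpl; intros H; [lra |].
  assert (0 <= rsum n f) by (apply IHn; intros; apply H; lia).
  assert (0 <= f n) by (apply H; lia). lra.
Qed.

Lemma rsum_delta n j f : (j < n)%nat -> rsum n (fun i => delta i j * f i) = f j.
Proof.
  intros Hj. rewrite (rsum_single n j); auto.
  - unfold delta; rewrite Nat.eqb_refl; ring.
  - intros i _ Hi. unfold delta. apply Nat.eqb_neq in Hi; rewrite Hi; ring.
Qed.

Lemma fsum_seq f k : fsum f (seq 0 k) = rsum k f.
Proof. induction k; auto. rewrite seq_S, fsum_app, IHk. simpl. ring. Qed.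

Lemma rprod_nonneg n f : (forall i, (i < n)%nat -> 0 <= f i) -> 0 <= rprod n f.
Proof.
  induction n; simpl; intros H; [lra |].
  apply Rmult_le_pos; [apply IHn; intros; apply H; lia | apply H; lia].
Qed.

Lemma rprod_ext n f g : (forall i, (i < n)%nat -> f i = g i) -> rprod n f = rprod n g.
Proof. induction n; simpl; intros H; auto. rewrite IHn, H; auto. Qed.

Lemma rprod_mult n f g : rprod n (fun i => f i * g i) = rprod n f * rprod n g.
Proof. induction n; simpl; [ring | rewrite IHn; ring]. Qed.

Lemma rprod_single T t0 (a : nat -> R) :
  rprod T (fun i => if Nat.eqb (S i) t0 then a (S i) else 1) =
  if andb (Nat.leb 1 t0) (Nat.leb t0 T) then a t0 else 1.
Proof.
  induction T.
  - cbn [rprod]. destruct (Nat.leb_spec 1 t0); destruct (Nat.leb_spec t0 0); try lia; reflexivity.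
  - change (rprod (S T) ?f) with (rprod T f * f T). rewrite IHT.
    destruct (Nat.eqb_spec (S T) t0); destruct (Nat.leb_spec 1 t0);
      destruct (Nat.leb_spec t0 T); destruct (Nat.leb_spec t0 (S T));
      simpl; try lia; subst; ring.
Qed.

Definition BN (n : nat) : Type := { x : nat | (x <= n)%nat }.

Definition mkBN (n x : nat) : BN n :=
  match Compare_dec.le_dec x n with
  | left p => exist _ x p
  | right _ => exist _ O (Nat.le_0_l n)
  end.

Lemma mkBN_val n x : (x <= n)%nat -> proj1_sig (mkBN n x) = x.
Proof. unfold mkBN; destruct (Compare_dec.le_dec x n); simpl; auto; lia. Qed.

Lemma sig_eq {A} (P : A -> Prop) (a b : {x | P x}) : proj1_sig a = proj1_sig b -> a = b.
Proof. destruct a, b; simpl; intros; subst. f_equal; apply proof_irrelevance. Qed.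

Lemma has_sum_BN n (h : nat -> R) : has_sum (fun b : BN n => h (proj1_sig b)) (rsum (S n) h).
Proof.
  set (enum := map (mkBN n) (seq 0 (S n))).
  replace (rsum (S n) h) with (fsum (fun b : BN n => h (proj1_sig b)) enum).
  - apply has_sum_support.
    + apply FinFun.Injective_map_NoDup_in; [| apply seq_NoDup].
      intros x y Hx Hy E. apply in_seq in Hx, Hy.
      rewrite <- (mkBN_val n x), <- (mkBN_val n y), E; auto; lia.
    + intros [x Hx] _. apply in_map_iff. exists x.
      split; [apply sig_eq; rewrite mkBN_val; auto | apply in_seq; lia].
  - unfold enum. rewrite fsum_map, <- fsum_seq. apply fsum_ext_in.
    intros x Hx. apply in_seq in Hx. rewrite mkBN_val; auto; lia.
Qed.

Lemma Cx_ext z w : Cre z = Cre w -> Cim z = Cim w -> z = w.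
Proof. destruct z, w; simpl; intros; subst; auto. Qed.

Lemma Cx_ring : ring_theory (RtoC 0) (RtoC 1) Cadd Cmul Csub Copp (@eq Cx).
Proof. constructor; intros; apply Cx_ext; simpl; ring. Qed.
Add Ring CxRing : Cx_ring.

Lemma RtoC_plus a b : RtoC (a + b) = Cadd (RtoC a) (RtoC b).
Proof. apply Cx_ext; simpl; ring. Qed.

Lemma RtoC_mult a b : RtoC (a * b) = Cmul (RtoC a) (RtoC b).
Proof. apply Cx_ext; simpl; ring. Qed.

Lemma csum_ext n f g : (forall i, (i < n)%nat -> f i = g i) -> csum n f = csum n g.
Proof. induction n; simpl; intros H; auto. rewrite IHn, H; auto. Qed.

Lemma csum_plus n f g : csum n (fun i => Cadd (f i) (g i)) = Cadd (csum n f) (csum n g).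
Proof. induction n; simpl; [ring | rewrite IHn; ring]. Qed.

Lemma csum_scal n c f : csum n (fun i => Cmul c (f i)) = Cmul c (csum n f).
Proof. induction n; simpl; [ring | rewrite IHn; ring]. Qed.

Lemma csum_zero n f : (forall i, (i < n)%nat -> f i = RtoC 0) -> csum n f = RtoC 0.
Proof. induction n; simpl; intros H; auto. rewrite IHn, H; auto; ring. Qed.

Lemma csum_swap n m f :
  csum n (fun i => csum m (fun j => f i j)) = csum m (fun j => csum n (fun i => f i j)).
Proof. induction n; simpl. { rewrite csum_zero; auto. } rewrite IHn, <- csum_plus; auto. Qed.

Lemma csum_mul n m f g :
  Cmul (csum n f) (csum m g) = csum n (fun i => csum m (fun j => Cmul (f i) (g j))).
Proof. induction n; simpl; [ring |]. rewrite <- IHn, csum_scal. ring. Qed.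

Lemma RtoC_rsum n f : RtoC (rsum n f) = csum n (fun i => RtoC (f i)).
Proof. induction n; simpl; auto. rewrite RtoC_plus, IHn; auto. Qed.

Lemma csum_delta n j f : (j < n)%nat -> csum n (fun i => Cmul (RtoC (delta i j)) (f i)) = f j.
Proof.
  intros Hj. induction n as [| n IH]; [lia |]. simpl.
  destruct (Nat.eq_dec j n) as [-> | Hne].
  - rewrite csum_zero; [unfold delta; rewrite Nat.eqb_refl; ring |].
    intros i Hi. unfold delta.
    replace (Nat.eqb i n) with false by (symmetry; apply Nat.eqb_neq; lia). ring.
  - rewrite IH by lia. unfold delta.
    replace (Nat.eqb n j) with false by (symmetry; apply Nat.eqb_neq; lia). ring.
Qed.

Lemma Sample_eq s s' : (forall t, sx s t = sx s' t) -> (forall t, sxp s t = sxp s' t) ->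
  (forall t, sy s t = sy s' t) -> s = s'.
Proof.
  destruct s as [a b c], s' as [a' b' c']; simpl; intros H1 H2 H3.
  apply functional_extensionality in H1, H2, H3. subst; auto.
Qed.

Definition trunc (T : nat) (s : Sample) : Sample :=
  mkSample (fun t => if Nat.leb t T then sx s t else O)
           (fun t => if Nat.leb t T then sxp s t else O)
           (fun t => if Nat.leb t T then sy s t else O).

Definition extd (T : nat) (s : Sample) (x' x y : nat) : Sample :=
  mkSample (fun t => if Nat.eqb t (S T) then x else sx s t)
           (fun t => if Nat.eqb t (S T) then x' else sxp s t)
           (fun t => if Nat.eqb t (S T) then y else sy s t).

Section OneCopy.
Variable r : nat.
Variable q : nat -> nat -> R.
Variable nu : nat -> R.
Variables p00 p10 : nat -> R.
Hypothesis hq01 : forall x z, (x <= r)%nat -> (z <= r - 1)%nat -> 0 <= q x z <= 1.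
Hypothesis hnu0 : forall x, (x <= r)%nat -> 0 <= nu x.
Hypothesis hp00 : forall n, 0 <= p00 n.
Hypothesis hp10 : forall n, 0 <= p10 n.

(* Paths of one copy up to time T, and the data (X'_{T+1}, X_{T+1}, Y_{T+1})
   of one further step. *)
Definition Omega1 (T : nat) : Type := { s : Sample | canon1 r T s }.
Definition Step : Type := ((BN r * BN r) * nat)%type.

Lemma canon_trunc T s : canon1 r (S T) s -> canon1 r T (trunc T s).
Proof.
  intros (H0 & H1 & H2 & H3 & H4). unfold trunc; repeat split; simpl;
    try (destruct (Nat.leb_spec t T); [apply H3 | ]; lia);
    try (destruct (Nat.leb_spec t T); [lia | auto]);
    destruct (Nat.leb 0 T); auto; lia.
Qed.

Lemma canon_extd T s x' x y : canon1 r T s -> (x' <= r)%nat -> (x <= r)%nat ->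
  canon1 r (S T) (extd T s x' x y).
Proof.
  intros (H0 & H1 & H2 & H3 & H4) Hx' Hx. unfold extd; repeat split; simpl; auto;
    destruct (Nat.eqb_spec t (S T)); auto; first [apply H3; lia | apply H4; lia | lia].
Qed.

Definition split_last (T : nat) (a : Omega1 (S T)) : Omega1 T * Step :=
  let s := proj1_sig a in
  (exist _ (trunc T s) (canon_trunc T s (proj2_sig a)),
   ((mkBN r (sxp s (S T)), mkBN r (sx s (S T))), sy s (S T))).

Definition join_last (T : nat) (p : Omega1 T * Step) : Omega1 (S T) :=
  match p with (a, ((b1, b2), y)) =>
    exist _ (extd T (proj1_sig a) (proj1_sig b1) (proj1_sig b2) y)
      (canon_extd T _ _ _ y (proj2_sig a) (proj2_sig b1) (proj2_sig b2)) end.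

Lemma trunc_extd T s x' x y : canon1 r T s -> trunc T (extd T s x' x y) = s.
Proof.
  intros (H0 & H1 & H2 & H3 & H4).
  apply Sample_eq; intros t; unfold trunc, extd; simpl;
    (destruct (Nat.leb_spec t T); [destruct (Nat.eqb_spec t (S T)); [lia | auto] |]);
    symmetry; apply H4; lia.
Qed.

Lemma join_split T a : join_last T (split_last T a) = a.
Proof.
  destruct a as [s Hs]. apply sig_eq. simpl.
  pose proof Hs as (H0 & H1 & H2 & H3 & H4).
  destruct (H3 (S T)) as [Bx Bxp]; [lia |].
  rewrite !mkBN_val by auto.
  apply Sample_eq; intros t; unfold extd, trunc; simpl;
    (destruct (Nat.eqb_spec t (S T)); [subst; auto |]);
    (destruct (Nat.leb_spec t T); [auto |]); symmetry; apply H4; lia.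
Qed.

Lemma split_join T p : split_last T (join_last T p) = p.
Proof.
  destruct p as [[s Hs] [[[b1 Hb1] [b2 Hb2]] y]]. unfold split_last, join_last; simpl.
  rewrite !Nat.eqb_refl.
  assert (E1 : mkBN r b1 = exist _ b1 Hb1) by (apply sig_eq; rewrite mkBN_val; auto).
  assert (E2 : mkBN r b2 = exist _ b2 Hb2) by (apply sig_eq; rewrite mkBN_val; auto).
  rewrite E1, E2. apply injective_projections; [simpl | reflexivity].
  apply (sig_eq (canon1 r T)), trunc_extd; auto.
Qed.

(* Weight of one transition (X_{t-1} = z) -> (X'_t, X_t, Y_t) = (x', x, y). *)
Definition step_weight (z x' x y : nat) : R := Ml q r x' z * Ms q x x' * pem p00 p10 x x' y.

Lemma P1_agree T s s' :
  (forall t, (t <= T)%nat -> sx s t = sx s' t /\ sxp s t = sxp s' t /\ sy s t = sy s' t) ->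
  P1 q nu p00 p10 r T s = P1 q nu p00 p10 r T s'.
Proof.
  intros H. unfold P1. destruct (H O) as [-> _]; [lia |]. f_equal. apply rprod_ext. intros i Hi.
  destruct (H (S i)) as (A1 & A2 & A3); [lia |]. destruct (H (S i - 1)%nat) as (B1 & _); [lia |].
  cbv beta zeta. rewrite A1, A2, A3, B1. reflexivity.
Qed.

Lemma P1_last T s : P1 q nu p00 p10 r (S T) s =
  P1 q nu p00 p10 r T (trunc T s) * step_weight (sx s T) (sxp s (S T)) (sx s (S T)) (sy s (S T)).
Proof.
  rewrite (P1_agree T (trunc T s) s).
  - unfold P1, step_weight. simpl rprod. rewrite Nat.sub_0_r. ring.
  - intros t Ht. unfold trunc; simpl.
    replace (Nat.leb t T) with true by (symmetry; apply Nat.leb_le; lia). auto.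
Qed.

Lemma Ml_nonneg x' z : (x' <= r)%nat -> (z <= r)%nat -> 0 <= Ml q r x' z.
Proof.
  intros. unfold Ml, delta. destruct (Nat.eqb z 0); [destruct (Nat.eqb x' 0); lra |].
  destruct (Nat.eqb_spec z r); [destruct (Nat.eqb x' r); lra |]. apply hq01; lia.
Qed.

Lemma Ms_nonneg x x' : (x <= r)%nat -> (x' <= r)%nat -> 0 <= Ms q x x'.
Proof.
  intros. unfold Ms, delta. destruct (Nat.eqb x' 0); [apply hq01; lia |].
  destruct (Nat.eqb x x'); lra.
Qed.

Lemma pem_nonneg x x' y : 0 <= pem p00 p10 x x' y.
Proof.
  unfold pem. destruct (Nat.eqb x' 0); [destruct (Nat.eqb x 0); auto |].
  destruct (Nat.eqb y 0); lra.
Qed.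

Lemma P1_nonneg T s : canon1 r T s -> 0 <= P1 q nu p00 p10 r T s.
Proof.
  intros (H0 & H1 & H2 & H3 & H4). unfold P1. apply Rmult_le_pos; [apply hnu0; auto |].
  apply rprod_nonneg. intros i Hi. simpl. rewrite Nat.sub_0_r.
  destruct (H3 (S i)) as [Bx Bxp]; [lia |].
  assert (Bi : (sx s i <= r)%nat) by (destruct i; [auto | apply H3; lia]).
  repeat apply Rmult_le_pos; [apply Ml_nonneg | apply Ms_nonneg | apply pem_nonneg]; auto.
Qed.

Definition obs_weight (k : nat -> nat -> R) (T : nat) (s : Sample) : R :=
  rprod T (fun i => k (S i) (sy s (S i))).

Lemma obs_weight_last k T s :
  obs_weight k (S T) s = obs_weight k T (trunc T s) * k (S T) (sy s (S T)).
Proof.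
  unfold obs_weight. change (rprod (S T) ?f) with (rprod T f * f T). f_equal.
  apply rprod_ext. intros i Hi. unfold trunc. cbv beta. unfold sy at 2.
  replace (Nat.leb (S i) T) with true by (symmetry; apply Nat.leb_le; lia). auto.
Qed.

(* Expected observation weight at time t given (X_t, X'_t) = (x, x'), where
   E00 t and E10 t are the means of k_t under p00 and p10. *)
Definition emis_mean (k : nat -> nat -> R) (E00 E10 : nat -> R) (t x x' : nat) : R :=
  if Nat.eqb x' 0 then (if Nat.eqb x 0 then E00 t else E10 t) else k t O.

Definition Mlvec (u : nat -> R) (x' : nat) : R := rsum (S r) (fun z => Ml q r x' z * u z).

(* Forward vectors: F_T(x) is the sum of path weight times observation weight
   over the paths of length T ending in X_T = x. *)
Fixpoint forward (k : nat -> nat -> R) (E00 E10 : nat -> R) (T : nat) : nat -> R :=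
  match T with
  | O => nu
  | S T' => fun x => rsum (S r) (fun x' =>
             Ms q x x' * emis_mean k E00 E10 (S T') x x' * Mlvec (forward k E00 E10 T') x')
  end.

Section Forward.
Variable k : nat -> nat -> R.
Variables E00 E10 : nat -> R.
Hypothesis hk : forall t y, 0 <= k t y.
Hypothesis hE00 : forall t, has_sum (fun n => p00 n * k t n) (E00 t).
Hypothesis hE10 : forall t, has_sum (fun n => p10 n * k t n) (E10 t).

Lemma emis_mean_sum t x x' :
  has_sum (fun y => pem p00 p10 x x' y * k t y) (emis_mean k E00 E10 t x x').
Proof.
  unfold pem, emis_mean. destruct (Nat.eqb x' 0); [destruct (Nat.eqb x 0); auto |].
  apply (has_sum_eq _ (fsum (fun y => (if Nat.eqb y 0 then 1 else 0) * k t y) (O :: nil))).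
  - simpl; ring.
  - apply has_sum_support; [repeat constructor; auto |].
    intros a Ha. destruct (Nat.eqb_spec a 0); [left; auto |]. exfalso; apply Ha; ring.
Qed.

Lemma emis_mean_nonneg t x x' : 0 <= emis_mean k E00 E10 t x x'.
Proof.
  apply (has_sum_ge0 _ _ (emis_mean_sum t x x')).
  intros; apply Rmult_le_pos; [apply pem_nonneg | auto].
Qed.

Definition step_kernel (t : nat) (phi : nat -> R) (z : nat) : R :=
  rsum (S r) (fun x' => rsum (S r) (fun x =>
    Ml q r x' z * Ms q x x' * emis_mean k E00 E10 t x x' * phi x)).

Lemma step_kernel_nonneg t phi z : (forall x, (x <= r)%nat -> 0 <= phi x) ->
  (z <= r)%nat -> 0 <= step_kernel t phi z.
Proof.
  intros Hphi Hz. apply rsum_nonneg; intros x' Hx'; apply rsum_nonneg; intros x Hx.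
  repeat apply Rmult_le_pos;
    [apply Ml_nonneg | apply Ms_nonneg | apply emis_mean_nonneg | apply Hphi]; lia.
Qed.

Lemma sum_one_step T (a : Omega1 T) phi : (forall x, (x <= r)%nat -> 0 <= phi x) ->
  let s := proj1_sig a in
  has_sum (fun st : Step => let b := proj1_sig (join_last T (a, st)) in
      P1 q nu p00 p10 r (S T) b * obs_weight k (S T) b * phi (sx b (S T)))
    (P1 q nu p00 p10 r T s * obs_weight k T s * step_kernel (S T) phi (sx s T)).
Proof.
  intros Hphi. destruct a as [s Hs]. cbv zeta. cbn [proj1_sig].
  pose proof Hs as (H0 & H1 & H2 & H3 & H4).
  assert (Hz : (sx s T <= r)%nat) by (destruct T; [auto | apply H3; lia]).
  set (c := P1 q nu p00 p10 r T s * obs_weight k T s).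
  assert (Hc0 : 0 <= c)
    by (apply Rmult_le_pos; [apply P1_nonneg; auto | apply rprod_nonneg; auto]).
  set (w := fun (b1 b2 : nat) (y : nat) =>
    c * (Ml q r b1 (sx s T) * Ms q b2 b1 * phi b2) * (pem p00 p10 b2 b1 y * k (S T) y)).
  apply (has_sum_ext (fun st : Step =>
    w (proj1_sig (fst (fst st))) (proj1_sig (snd (fst st))) (snd st))).
  { intros [[[b1 Hb1] [b2 Hb2]] y]. cbn [join_last proj1_sig fst snd].
    rewrite P1_last, obs_weight_last, trunc_extd by auto.
    unfold w, step_weight, extd, c; cbn [sx sxp sy]. rewrite !Nat.eqb_refl.
    replace (Nat.eqb T (S T)) with false by (symmetry; apply Nat.eqb_neq; lia). ring. }
  apply (tonelli _ (fun bb : BN r * BN r =>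
    c * (Ml q r (proj1_sig (fst bb)) (sx s T) * Ms q (proj1_sig (snd bb)) (proj1_sig (fst bb))
          * emis_mean k E00 E10 (S T) (proj1_sig (snd bb)) (proj1_sig (fst bb))
          * phi (proj1_sig (snd bb))))).
  - intros [[[b1 Hb1] [b2 Hb2]] y]. unfold w; cbn [proj1_sig fst snd].
    apply Rmult_le_pos; [apply Rmult_le_pos; [exact Hc0 |] | apply Rmult_le_pos; auto].
    + repeat apply Rmult_le_pos; [apply Ml_nonneg | apply Ms_nonneg | apply Hphi]; auto.
    + apply pem_nonneg.
  - intros [[b1 Hb1] [b2 Hb2]]. unfold w; cbn [proj1_sig fst snd].
    eapply has_sum_eq; [| apply has_sum_scal, emis_mean_sum]. ring.
  - apply has_sum_scal. unfold step_kernel.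
    apply (tonelli _ (fun b : BN r => rsum (S r) (fun x =>
      Ml q r (proj1_sig b) (sx s T) * Ms q x (proj1_sig b)
      * emis_mean k E00 E10 (S T) x (proj1_sig b) * phi x))).
    + intros [[b1 Hb1] [b2 Hb2]]. cbn [proj1_sig fst snd].
      repeat apply Rmult_le_pos;
        [apply Ml_nonneg | apply Ms_nonneg | apply emis_mean_nonneg | apply Hphi]; auto.
    + intros b. cbn [fst snd]. apply (has_sum_BN r (fun x =>
        Ml q r (proj1_sig b) (sx s T) * Ms q x (proj1_sig b)
        * emis_mean k E00 E10 (S T) x (proj1_sig b) * phi x)).
    + apply (has_sum_BN r (fun x' => rsum (S r) (fun x =>
        Ml q r x' (sx s T) * Ms q x x' * emis_mean k E00 E10 (S T) x x' * phi x))).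
Qed.

Lemma forward_step_kernel T phi :
  rsum (S r) (fun z => forward k E00 E10 T z * step_kernel (S T) phi z) =
  rsum (S r) (fun x => forward k E00 E10 (S T) x * phi x).
Proof.
  cbn [forward]. unfold step_kernel, Mlvec.
  rewrite (rsum_ext (S r) _ (fun z => rsum (S r) (fun x' => rsum (S r) (fun x =>
    forward k E00 E10 T z * (Ml q r x' z * Ms q x x' * emis_mean k E00 E10 (S T) x x' * phi x))))).
  2:{ intros; rewrite <- rsum_scal; apply rsum_ext; intros; rewrite <- rsum_scal; auto. }
  rewrite rsum_swap, (rsum_ext (S r) _ (fun x' => rsum (S r) (fun x => rsum (S r) (fun z =>
    forward k E00 E10 T z * (Ml q r x' z * Ms q x x' * emis_mean k E00 E10 (S T) x x' * phi x)))))
    by (intros; apply rsum_swap).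
  rewrite rsum_swap. apply rsum_ext; intros x Hx.
  rewrite <- rsum_scal_r. apply rsum_ext; intros x' Hx'.
  rewrite <- !rsum_scal, <- rsum_scal_r. apply rsum_ext; intros z Hz. ring.
Qed.

Lemma canon_initial (b : BN r) :
  canon1 r 0 (mkSample (fun t => if Nat.eqb t 0 then proj1_sig b else O) (fun _ => O) (fun _ => O)).
Proof.
  destruct b as [x Hx]; repeat split; simpl; auto; intros; try lia.
  destruct (Nat.eqb_spec t 0); auto; lia.
Qed.

Lemma forward_initial phi :
  has_sum (fun a : Omega1 0 => P1 q nu p00 p10 r 0 (proj1_sig a)
             * obs_weight k 0 (proj1_sig a) * phi (sx (proj1_sig a) 0))
    (rsum (S r) (fun x => nu x * phi x)).
Proof.
  set (init := fun b : BN r => exist (canon1 r 0) _ (canon_initial b) : Omega1 0).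
  apply (has_sum_iso init (fun a => mkBN r (sx (proj1_sig a) 0))).
  - intros [x Hx]. apply sig_eq. simpl. rewrite mkBN_val; auto.
  - intros [s Hs]. apply sig_eq. simpl. pose proof Hs as (H0 & H1 & H2 & H3 & H4).
    rewrite mkBN_val by auto. apply Sample_eq; intros t; simpl.
    + destruct (Nat.eqb_spec t 0); [subst; auto |]. symmetry; apply H4; lia.
    + destruct t; auto. symmetry; apply H4; lia.
    + destruct t; auto. symmetry; apply H4; lia.
  - apply (has_sum_ext (fun b : BN r => nu (proj1_sig b) * phi (proj1_sig b))).
    + intros [x Hx]. unfold P1, obs_weight. simpl. ring.
    + apply (has_sum_BN r (fun x => nu x * phi x)).
Qed.

Theorem forward_sum T phi : (forall x, (x <= r)%nat -> 0 <= phi x) ->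
  has_sum (fun a : Omega1 T => P1 q nu p00 p10 r T (proj1_sig a)
             * obs_weight k T (proj1_sig a) * phi (sx (proj1_sig a) T))
    (rsum (S r) (fun x => forward k E00 E10 T x * phi x)).
Proof.
  revert phi; induction T as [| T IH]; intros phi Hphi; [apply forward_initial |].
  rewrite <- forward_step_kernel.
  apply (has_sum_iso (join_last T) (split_last T)); [apply split_join | apply join_split |].
  apply (tonelli _ (fun a : Omega1 T => P1 q nu p00 p10 r T (proj1_sig a)
          * obs_weight k T (proj1_sig a) * step_kernel (S T) phi (sx (proj1_sig a) T))).
  - intros [[s Hs] [[[b1 Hb1] [b2 Hb2]] y]]. cbn [join_last proj1_sig].
    assert (Hc : canon1 r (S T) (extd T s b1 b2 y)) by (apply canon_extd; auto).
    apply Rmult_le_pos; [apply Rmult_le_pos; [apply P1_nonneg; auto | apply rprod_nonneg; auto] |].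
    apply Hphi. unfold extd; simpl; rewrite Nat.eqb_refl; auto.
  - intros a. apply (sum_one_step T a phi Hphi).
  - apply IH. intros z Hz. apply step_kernel_nonneg; auto.
Qed.
End Forward.
End OneCopy.

Lemma has_sum_covariance {A} (P X Y : A -> R) a b c :
  has_sum P 1 -> has_sum (fun w => P w * X w) a -> has_sum (fun w => P w * Y w) b ->
  has_sum (fun w => P w * (X w * Y w)) c ->
  has_sum (fun w => P w * ((X w - a) * (Y w - b))) (c - a * b).
Proof.
  intros H1 HX HY HXY.
  pose proof (has_sum_plus _ _ _ _
    (has_sum_minus _ _ _ _ (has_sum_minus _ _ _ _ HXY (has_sum_scal _ b _ HX))
       (has_sum_scal _ a _ HY)) (has_sum_scal _ (a * b) _ H1)) as H.
  eapply has_sum_eq; [| eapply has_sum_ext; [| exact H]]; cbv beta; [ring | intros w; ring].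
Qed.

Section Copies.
Variables r T : nat.
Variable q : nat -> nat -> R.
Variable nu : nat -> R.
Variables p00 p10 : nat -> R.
Hypothesis hq01 : forall x z, (x <= r)%nat -> (z <= r - 1)%nat -> 0 <= q x z <= 1.
Hypothesis hnu0 : forall x, (x <= r)%nat -> 0 <= nu x.
Hypothesis hp00 : forall n, 0 <= p00 n.
Hypothesis hp10 : forall n, 0 <= p10 n.

Definition drop_copy (m : nat) (w : nat -> Sample) : nat -> Sample :=
  fun k => if Nat.ltb k m then w k else zeroS.

Definition add_copy (m : nat) (w : nat -> Sample) (s : Sample) : nat -> Sample :=
  fun k => if Nat.eqb k m then s else w k.

Lemma canon_drop_copy m w : canon r T (S m) w -> canon r T m (drop_copy m w).
Proof.
  intros [H1 H2]; split; intros k Hk; unfold drop_copy.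
  - replace (Nat.ltb k m) with true by (symmetry; apply Nat.ltb_lt; lia). apply H1; lia.
  - replace (Nat.ltb k m) with false by (symmetry; apply Nat.ltb_ge; lia). auto.
Qed.

Lemma canon_last_copy m w : canon r T (S m) w -> canon1 r T (w m).
Proof. intros [H1 _]; apply H1; lia. Qed.

Lemma canon_add_copy m w s : canon r T m w -> canon1 r T s -> canon r T (S m) (add_copy m w s).
Proof.
  intros [H1 H2] Hs; split; intros k Hk; unfold add_copy;
    destruct (Nat.eqb_spec k m); auto; try lia; [apply H1 | apply H2]; lia.
Qed.

Definition split_copy (m : nat) (a : Omega r T (S m)) : Omega r T m * Omega1 r T :=
  (exist _ (drop_copy m (proj1_sig a)) (canon_drop_copy m _ (proj2_sig a)),
   exist _ (proj1_sig a m) (canon_last_copy m _ (proj2_sig a))).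

Definition join_copy (m : nat) (p : Omega r T m * Omega1 r T) : Omega r T (S m) :=
  exist _ (add_copy m (proj1_sig (fst p)) (proj1_sig (snd p)))
    (canon_add_copy m _ _ (proj2_sig (fst p)) (proj2_sig (snd p))).

Lemma join_split_copy m a : join_copy m (split_copy m a) = a.
Proof.
  destruct a as [w [H1 H2]]. apply sig_eq. simpl. apply functional_extensionality; intros k.
  unfold add_copy, drop_copy. destruct (Nat.eqb_spec k m); [subst; auto |].
  destruct (Nat.ltb_spec k m); auto. symmetry; apply H2; lia.
Qed.

Lemma split_join_copy m p : split_copy m (join_copy m p) = p.
Proof.
  destruct p as [[w [H1 H2]] [s Hs]]. unfold split_copy, join_copy.
  apply injective_projections; cbn [fst snd]; apply sig_eq; simpl.
  - apply functional_extensionality; intros k. unfold add_copy, drop_copy.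
    destruct (Nat.ltb_spec k m); [destruct (Nat.eqb_spec k m); auto; lia |].
    symmetry; apply H2; lia.
  - unfold add_copy; rewrite Nat.eqb_refl; auto.
Qed.

Definition Pcopies m (a : Omega r T m) := Pm q nu p00 p10 r T m a.
Definition Pcopy (a : Omega1 r T) := P1 q nu p00 p10 r T (proj1_sig a).
Definition Ycopy (t : nat) (a : Omega1 r T) : R := INR (sy (proj1_sig a) t).

Lemma Pcopies_S m a :
  Pcopies (S m) a = Pcopies m (fst (split_copy m a)) * Pcopy (snd (split_copy m a)).
Proof.
  unfold Pcopies, Pcopy, Pm, split_copy; simpl. f_equal.
  apply rprod_ext; intros i Hi. unfold drop_copy.
  replace (Nat.ltb i m) with true by (symmetry; apply Nat.ltb_lt; lia). auto.
Qed.

Lemma Ym_S m t a :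
  @Ym r T (S m) t a = @Ym r T m t (fst (split_copy m a)) + Ycopy t (snd (split_copy m a)).
Proof.
  unfold Ym, Ycopy, split_copy; simpl. f_equal.
  apply rsum_ext; intros i Hi. unfold drop_copy.
  replace (Nat.ltb i m) with true by (symmetry; apply Nat.ltb_lt; lia). auto.
Qed.

Lemma Pcopies_nonneg m a : 0 <= Pcopies m a.
Proof.
  destruct a as [w [H1 H2]]. unfold Pcopies, Pm; simpl.
  apply rprod_nonneg. intros; apply P1_nonneg; auto.
Qed.

Lemma Pcopy_nonneg a : 0 <= Pcopy a.
Proof. destruct a as [s Hs]. unfold Pcopy; simpl. apply P1_nonneg; auto. Qed.

Lemma Ym_nonneg m t a : 0 <= @Ym r T m t a.
Proof. unfold Ym. apply rsum_nonneg. intros; apply pos_INR. Qed.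

Lemma Ycopy_nonneg t a : 0 <= Ycopy t a.
Proof. apply pos_INR. Qed.

Lemma zero_canon : canon r T 0 (fun _ => zeroS).
Proof. split; intros; [lia | auto]. Qed.

Lemma has_sum_zero_copies (f : Omega r T 0 -> R) : has_sum f (f (exist _ _ zero_canon)).
Proof.
  apply (has_sum_eq _ (fsum f (exist _ _ zero_canon :: nil))); [simpl; ring |].
  apply has_sum_support; [repeat constructor; auto |].
  intros a _. left. apply sig_eq. destruct a as [w [H1 H2]]. simpl.
  apply functional_extensionality; intros k. symmetry; apply H2; lia.
Qed.

Lemma has_sum_add_copy m (f : Omega r T m -> R) (g : Omega1 r T -> R) u v :
  (forall x, 0 <= f x) -> (forall y, 0 <= g y) -> has_sum f u -> has_sum g v ->
  has_sum (fun a => f (fst (split_copy m a)) * g (snd (split_copy m a))) (u * v).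
Proof.
  intros Hf Hg Hu Hv.
  apply (has_sum_iso (join_copy m) (split_copy m));
    [apply split_join_copy | apply join_split_copy |].
  apply (has_sum_ext (fun p => f (fst p) * g (snd p)));
    [intros p; rewrite split_join_copy; auto | apply has_sum_prod; auto].
Qed.

Hypothesis one_copy_mass : has_sum Pcopy 1.

Lemma copies_mass m : has_sum (Pcopies m) 1.
Proof.
  induction m as [| m IH].
  - eapply has_sum_eq; [| apply has_sum_zero_copies]. unfold Pcopies, Pm; simpl; ring.
  - pose proof (has_sum_add_copy m _ _ _ _ (Pcopies_nonneg m) Pcopy_nonneg IH one_copy_mass)
      as H.
    eapply has_sum_eq; [| eapply has_sum_ext; [| exact H]]; cbv beta;
      [ring | intros a; symmetry; apply Pcopies_S].
Qed.

Lemma copies_mean t a : has_sum (fun s => Pcopy s * Ycopy t s) a ->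
  forall m, has_sum (fun w => Pcopies m w * Ym t w) (INR m * a).
Proof.
  intros Ha m. induction m as [| m IH].
  - eapply has_sum_eq; [| apply has_sum_zero_copies]. unfold Ym; simpl; ring.
  - assert (Y0 : forall x, 0 <= Pcopies m x * Ym t x)
      by (intros; apply Rmult_le_pos; [apply Pcopies_nonneg | apply Ym_nonneg]).
    assert (Y1 : forall y, 0 <= Pcopy y * Ycopy t y)
      by (intros; apply Rmult_le_pos; [apply Pcopy_nonneg | apply Ycopy_nonneg]).
    pose proof (has_sum_plus _ _ _ _
      (has_sum_add_copy m _ _ _ _ Y0 Pcopy_nonneg IH one_copy_mass)
      (has_sum_add_copy m _ _ _ _ (Pcopies_nonneg m) Y1 (copies_mass m) Ha)) as H.
    eapply has_sum_eq; [| eapply has_sum_ext; [| exact H]].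
    + rewrite S_INR; ring.
    + intros w. rewrite Pcopies_S, Ym_S. ring.
Qed.

Lemma copies_cross_moment t t' a a' b :
  has_sum (fun s => Pcopy s * Ycopy t s) a -> has_sum (fun s => Pcopy s * Ycopy t' s) a' ->
  has_sum (fun s => Pcopy s * (Ycopy t s * Ycopy t' s)) b ->
  forall m, has_sum (fun w => Pcopies m w * (Ym t w * Ym t' w))
              (INR m * b + INR m * (INR m - 1) * a * a').
Proof.
  intros Ha Ha' Hb m. induction m as [| m IH].
  - eapply has_sum_eq; [| apply has_sum_zero_copies]. unfold Ym; simpl; ring.
  - assert (Y0 : forall t0 x, 0 <= Pcopies m x * Ym t0 x)
      by (intros; apply Rmult_le_pos; [apply Pcopies_nonneg | apply Ym_nonneg]).
    assert (Y1 : forall t0 y, 0 <= Pcopy y * Ycopy t0 y)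
      by (intros; apply Rmult_le_pos; [apply Pcopy_nonneg | apply Ycopy_nonneg]).
    assert (YY0 : forall x, 0 <= Pcopies m x * (Ym t x * Ym t' x))
      by (intros; apply Rmult_le_pos; [| apply Rmult_le_pos];
          [apply Pcopies_nonneg | apply Ym_nonneg | apply Ym_nonneg]).
    assert (YY1 : forall y, 0 <= Pcopy y * (Ycopy t y * Ycopy t' y))
      by (intros; apply Rmult_le_pos; [| apply Rmult_le_pos];
          [apply Pcopy_nonneg | apply Ycopy_nonneg | apply Ycopy_nonneg]).
    (* expand (Y + y)(Y' + y') into the four products of old and new copy *)
    pose proof (has_sum_plus _ _ _ _
      (has_sum_plus _ _ _ _
        (has_sum_add_copy m _ _ _ _ YY0 Pcopy_nonneg IH one_copy_mass)
        (has_sum_add_copy m _ _ _ _ (Y0 t) (Y1 t') (copies_mean t a Ha m) Ha'))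
      (has_sum_plus _ _ _ _
        (has_sum_add_copy m _ _ _ _ (Y0 t') (Y1 t) (copies_mean t' a' Ha' m) Ha)
        (has_sum_add_copy m _ _ _ _ (Pcopies_nonneg m) YY1 (copies_mass m) Hb))) as H.
    eapply has_sum_eq; [| eapply has_sum_ext; [| exact H]].
    + rewrite S_INR; ring.
    + intros w. rewrite Pcopies_S, !Ym_S. ring.
Qed.

Theorem copies_covariance t t' a a' b m :
  has_sum (fun s => Pcopy s * Ycopy t s) a -> has_sum (fun s => Pcopy s * Ycopy t' s) a' ->
  has_sum (fun s => Pcopy s * (Ycopy t s * Ycopy t' s)) b ->
  has_sum (fun w => Pcopies m w * ((Ym t w - INR m * a) * (Ym t' w - INR m * a')))
    (INR m * (b - a * a')).
Proof.
  intros Ha Ha' Hb.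
  eapply has_sum_eq; [| apply has_sum_covariance;
    [apply copies_mass | apply copies_mean, Ha | apply copies_mean, Ha'
    | apply (copies_cross_moment t t' a a' b Ha Ha' Hb m)]].
  ring.
Qed.
End Copies.

Section Matrix.
Variable r : nat.
Variable q : nat -> nat -> R.
Hypothesis hqsum : forall z, (z <= r - 1)%nat -> rsum (S r) (fun x => q x z) = 1.

Definition Mvec (u : nat -> R) (x : nat) : R := rsum (S r) (fun x' => Ms q x x' * Mlvec r q u x').

Fixpoint Mpow (n : nat) (u : nat -> R) : nat -> R :=
  match n with O => u | S n' => Mvec (Mpow n' u) end.

Definition e0 (x : nat) : R := delta x O.

Lemma Mvec_lin a b u v x : Mvec (fun y => a * u y + b * v y) x = a * Mvec u x + b * Mvec v x.
Proof.
  unfold Mvec, Mlvec. rewrite <- (rsum_scal (S r) a), <- (rsum_scal (S r) b), <- rsum_plus.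
  apply rsum_ext; intros x' _.
  rewrite <- !(rsum_scal (S r) (Ms q x x')), <- (rsum_scal (S r) a), <- (rsum_scal (S r) b),
    <- rsum_plus.
  apply rsum_ext; intros; ring.
Qed.

Lemma Mpow_lin n a b u v x :
  Mpow n (fun y => a * u y + b * v y) x = a * Mpow n u x + b * Mpow n v x.
Proof.
  revert x; induction n; intros x; simpl; auto.
  rewrite (functional_extensionality _ _ IHn). apply Mvec_lin.
Qed.

Lemma Mpow_Mvec n u : Mpow n (Mvec u) = Mpow (S n) u.
Proof. induction n; simpl; auto. rewrite IHn; auto. Qed.

(* Both M^s and M^l are column-stochastic, hence M preserves total mass. *)
Lemma Ms_column x' : (x' <= r)%nat -> rsum (S r) (fun x => Ms q x x') = 1.
Proof.
  intros Hx. unfold Ms. destruct (Nat.eqb_spec x' 0); [apply hqsum; lia |].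
  rewrite (rsum_ext _ _ (fun x => delta x x' * 1)) by (intros; ring). apply rsum_delta; lia.
Qed.

Lemma Ml_column z : (z <= r)%nat -> rsum (S r) (fun x' => Ml q r x' z) = 1.
Proof.
  intros Hz. unfold Ml. destruct (Nat.eqb_spec z 0).
  - rewrite (rsum_ext _ _ (fun x => delta x 0 * 1)) by (intros; ring). apply rsum_delta; lia.
  - destruct (Nat.eqb_spec z r); [| apply hqsum; lia].
    rewrite (rsum_ext _ _ (fun x => delta x r * 1)) by (intros; ring). apply rsum_delta; lia.
Qed.

Lemma mass_Mvec u : rsum (S r) (Mvec u) = rsum (S r) u.
Proof.
  unfold Mvec, Mlvec.
  rewrite (rsum_ext _ _ (fun x => rsum (S r) (fun x' => rsum (S r) (fun z =>
    Ms q x x' * Ml q r x' z * u z)))).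
  2:{ intros; apply rsum_ext; intros. rewrite <- rsum_scal. apply rsum_ext; intros; ring. }
  rewrite rsum_swap, (rsum_ext _ _ (fun x' => rsum (S r) (fun z => rsum (S r) (fun x =>
    Ms q x x' * Ml q r x' z * u z)))) by (intros; apply rsum_swap).
  rewrite rsum_swap. apply rsum_ext. intros z Hz.
  rewrite (rsum_ext _ _ (fun x' => Ml q r x' z * u z)).
  2:{ intros x' Hx'. rewrite (rsum_ext _ _ (fun x => Ms q x x' * (Ml q r x' z * u z)))
        by (intros; ring).
      rewrite rsum_scal_r, Ms_column by lia. ring. }
  rewrite rsum_scal_r, Ml_column; [ring | lia].
Qed.

Lemma mass_Mpow n u : rsum (S r) (Mpow n u) = rsum (S r) u.
Proof. induction n; cbn [Mpow]; auto. rewrite mass_Mvec; auto. Qed.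

(* Only X'_t = 0 leads to X_t = 0 through M^s. *)
Lemma Mvec_0 u : Mvec u O = q O O * Mlvec r q u O.
Proof.
  unfold Mvec. rewrite (rsum_single (S r) O); [reflexivity | lia |].
  intros i _ Hi. unfold Ms, delta. apply Nat.eqb_neq in Hi. rewrite Hi.
  destruct i; [discriminate |]. simpl; ring.
Qed.

Lemma Mvec_e0 x : Mvec e0 x = q x O.
Proof.
  unfold Mvec. rewrite (rsum_single (S r) O); [| lia |].
  - unfold Mlvec, e0. rewrite (rsum_ext _ _ (fun z => delta z 0 * Ml q r 0 z)) by (intros; ring).
    rewrite rsum_delta by lia. unfold Ml, Ms, delta; simpl. ring.
  - intros i _ Hi. unfold Mlvec, e0.
    rewrite (rsum_ext _ _ (fun z => delta z 0 * Ml q r i z)) by (intros; ring).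
    rewrite rsum_delta by lia. unfold Ml, delta; simpl. apply Nat.eqb_neq in Hi; rewrite Hi; ring.
Qed.

Lemma sum_column0 c0 c1 :
  rsum (S r) (fun x => q x O * (if Nat.eqb x 0 then c0 else c1)) = q O O * c0 + (1 - q O O) * c1.
Proof.
  rewrite rsum_first. simpl. rewrite rsum_scal_r.
  pose proof (hqsum O ltac:(lia)) as H. rewrite rsum_first in H.
  replace (rsum r (fun i => q (S i) 0%nat)) with (1 - q O O) by lra. ring.
Qed.

(* pi u n = (M^n u)_0 / q00 is the probability of X'_n = 0 when X_0 ~ u. *)
Definition pi (u : nat -> R) (n : nat) : R := Mpow n u O / q O O.

Hypothesis hq00 : 0 < q O O < 1.

Lemma Mlvec_Mpow_0 n u : Mlvec r q (Mpow n u) O = pi u (S n).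
Proof. unfold pi. cbn [Mpow]. rewrite Mvec_0. field. lra. Qed.

Lemma pi_lin a b u v n : pi (fun y => a * u y + b * v y) n = a * pi u n + b * pi v n.
Proof. unfold pi. rewrite Mpow_lin. field. lra. Qed.

Lemma column0_split a b x :
  q x O * (if Nat.eqb x 0 then a else b) = (a - b) * q O O * e0 x + b * Mvec e0 x.
Proof.
  rewrite Mvec_e0. unfold e0, delta. destruct (Nat.eqb_spec x 0); [subst; ring | ring].
Qed.
End Matrix.

(* Observation weight counting photons at the times t0 and t1:
   k_t(y) = y^[t = t0] * y^[t = t1].  Time 0 carries no photons, so t0 = 0 or
   t1 = 0 switches the corresponding factor off. *)
Definition count_weight (t0 t1 t y : nat) : R :=
  (if Nat.eqb t t0 then INR y else 1) * (if Nat.eqb t t1 then INR y else 1).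

(* Its mean under an emission law with first moment a and second moment b. *)
Definition count_mean (a b : R) (t0 t1 t : nat) : R :=
  if Nat.eqb t t0 then (if Nat.eqb t t1 then b else a) else (if Nat.eqb t t1 then a else 1).

Lemma count_weight_nonneg t0 t1 t y : 0 <= count_weight t0 t1 t y.
Proof.
  unfold count_weight. pose proof (pos_INR y).
  destruct (Nat.eqb t t0), (Nat.eqb t t1); nra.
Qed.

Lemma count_mean_sum (p : nat -> R) a b :
  has_sum p 1 -> has_sum (fun n => p n * INR n) a -> has_sum (fun n => p n * INR n ^ 2) b ->
  forall t0 t1 t, has_sum (fun n => p n * count_weight t0 t1 t n) (count_mean a b t0 t1 t).
Proof.
  intros H1 Ha Hb t0 t1 t. unfold count_weight, count_mean.
  destruct (Nat.eqb t t0), (Nat.eqb t t1);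
    (eapply has_sum_ext; [| first [exact Hb | exact Ha | exact H1]]); intros; simpl; ring.
Qed.

Lemma obs_weight_count t0 t1 T s : obs_weight (count_weight t0 t1) T s =
  (if andb (Nat.leb 1 t0) (Nat.leb t0 T) then INR (sy s t0) else 1) *
  (if andb (Nat.leb 1 t1) (Nat.leb t1 T) then INR (sy s t1) else 1).
Proof.
  unfold obs_weight, count_weight. rewrite rprod_mult.
  rewrite (rprod_single T t0 (fun j => INR (sy s j))), (rprod_single T t1 (fun j => INR (sy s j))).
  reflexivity.
Qed.

Section Counts.
Variable r : nat.
Variable q : nat -> nat -> R.
Variable nu : nat -> R.
Variables e00 e10 f00 f10 : R.
Hypothesis hqsum : forall z, (z <= r - 1)%nat -> rsum (S r) (fun x => q x z) = 1.
Hypothesis hq00 : 0 < q O O < 1.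

Definition Fc (t0 t1 : nat) : nat -> nat -> R :=
  forward r q nu (count_weight t0 t1) (count_mean e00 f00 t0 t1) (count_mean e10 f10 t0 t1).

Lemma Fc_unobserved t0 t1 n : S n <> t0 -> S n <> t1 -> Fc t0 t1 (S n) = Mvec r q (Fc t0 t1 n).
Proof.
  intros H0 H1. apply functional_extensionality; intros x.
  unfold Fc, Mvec. cbn [forward]. apply rsum_ext; intros x' _.
  unfold emis_mean, count_weight, count_mean. apply Nat.eqb_neq in H0, H1. rewrite H0, H1.
  destruct (Nat.eqb x' 0), (Nat.eqb x 0); ring.
Qed.

(* ... and at an observation time only X'_t = 0 contributes, since the other
   emission states emit no photon. *)
Lemma Fc_observed t0 t1 n : (S n = t0 \/ S n = t1) -> forall x,
  Fc t0 t1 (S n) x = q x O * (if Nat.eqb x 0 then count_mean e00 f00 t0 t1 (S n)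
                              else count_mean e10 f10 t0 t1 (S n)) * Mlvec r q (Fc t0 t1 n) O.
Proof.
  intros H x. unfold Fc. cbn [forward]. rewrite (rsum_single (S r) O); [| lia |].
  - unfold emis_mean, Ms. simpl. ring.
  - intros i _ Hi. unfold emis_mean, count_weight. apply Nat.eqb_neq in Hi. rewrite Hi. simpl.
    destruct H as [<- | <-]; rewrite Nat.eqb_refl; ring.
Qed.

Lemma Fc_free t0 t1 a d : (forall j, (a < j <= a + d)%nat -> j <> t0 /\ j <> t1) ->
  Fc t0 t1 (a + d) = Mpow r q d (Fc t0 t1 a).
Proof.
  induction d as [| d IH]; intros H; [rewrite Nat.add_0_r; auto |].
  rewrite Nat.add_succ_r, Fc_unobserved by (apply (H (S (a + d))); lia).
  simpl. f_equal. apply IH. intros; apply H; lia.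
Qed.

Lemma Fc_mass_after t0 t1 t T : (t <= T)%nat ->
  (forall j, (t < j <= T)%nat -> j <> t0 /\ j <> t1) ->
  rsum (S r) (Fc t0 t1 T) = rsum (S r) (Fc t0 t1 t).
Proof.
  intros Ht H. replace T with (t + (T - t))%nat by lia.
  rewrite Fc_free by (intros; apply H; lia). apply mass_Mpow; auto.
Qed.

Lemma Fc_first_observation t0 t1 t : (1 <= t)%nat ->
  (forall j, (0 < j < t)%nat -> j <> t0 /\ j <> t1) -> (t = t0 \/ t = t1) -> forall x,
  Fc t0 t1 t x = pi r q nu t * (q x O * (if Nat.eqb x 0 then count_mean e00 f00 t0 t1 t
                                          else count_mean e10 f10 t0 t1 t)).
Proof.
  intros Ht Hb Hs x. destruct t as [| n]; [lia |].
  rewrite Fc_observed by auto.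
  replace (Fc t0 t1 n) with (Fc t0 t1 (0 + n)) by reflexivity.
  rewrite (Fc_free t0 t1 O n) by (intros; apply Hb; lia). unfold Fc at 1. cbn [forward].
  rewrite Mlvec_Mpow_0 by auto. ring.
Qed.

Lemma Fc_mass_none T (hnu1 : rsum (S r) nu = 1) : rsum (S r) (Fc O O T) = 1.
Proof.
  rewrite <- hnu1, <- (mass_Mpow r q hqsum T nu).
  replace T with (0 + T)%nat at 1 by lia. rewrite Fc_free by (intros; lia). reflexivity.
Qed.

Lemma Fc_mass_single (a b : R) t0 t1 t T : (1 <= t <= T)%nat ->
  (forall j, (0 < j < t)%nat -> j <> t0 /\ j <> t1) ->
  (forall j, (t < j <= T)%nat -> j <> t0 /\ j <> t1) ->
  (t = t0 \/ t = t1) -> count_mean e00 f00 t0 t1 t = a -> count_mean e10 f10 t0 t1 t = b ->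
  rsum (S r) (Fc t0 t1 T) = (q O O * a + (1 - q O O) * b) * pi r q nu t.
Proof.
  intros Ht Hb Ha Hs Ea Eb. rewrite (Fc_mass_after t0 t1 t T) by (auto; lia).
  rewrite (rsum_ext _ _ (fun x => pi r q nu t * (q x O * (if Nat.eqb x 0 then a else b))))
    by (intros; rewrite Fc_first_observation, Ea, Eb by (auto; lia); reflexivity).
  rewrite rsum_scal, sum_column0 by auto. ring.
Qed.

(* Two observation times t' < t: after t' the chain restarts from the state
   reached by emitting at t', a combination of e0 and M e0. *)
Lemma Fc_mass_pair t t' T : (1 <= t')%nat -> (t' < t)%nat -> (t <= T)%nat ->
  rsum (S r) (Fc t t' T) = theta1 (q O O) e00 e10 * pi r q nu t' *
    ((e00 - e10) * q O O * pi r q e0 (t - t') + e10 * pi r q e0 (S (t - t'))).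
Proof.
  intros H1 H2 H3. rewrite (Fc_mass_after t t' t T) by (auto; intros; lia).
  destruct t as [| n]; [lia |].
  rewrite (rsum_ext _ _ (fun x => q x O * (if Nat.eqb x 0 then e00 else e10)
                                   * Mlvec r q (Fc (S n) t' n) O)).
  2:{ intros x _. rewrite Fc_observed by auto. unfold count_mean. rewrite Nat.eqb_refl.
      replace (Nat.eqb (S n) t') with false by (symmetry; apply Nat.eqb_neq; lia). auto. }
  rewrite rsum_scal_r, sum_column0 by auto. unfold theta1.
  set (c := pi r q nu t').
  assert (Et' : Fc (S n) t' t' =
    fun x => c * (e00 - e10) * q O O * e0 x + c * e10 * Mvec r q e0 x).
  { apply functional_extensionality; intros x.
    rewrite Fc_first_observation by (auto; intros; lia). unfold count_mean.
    rewrite Nat.eqb_refl.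
    replace (Nat.eqb t' (S n)) with false by (symmetry; apply Nat.eqb_neq; lia).
    rewrite (column0_split r q). unfold c; ring. }
  replace (Fc (S n) t' n) with (Fc (S n) t' (t' + (n - t'))) by (f_equal; lia).
  rewrite Fc_free by (intros; lia). rewrite Et', Mlvec_Mpow_0, pi_lin by auto.
  unfold pi at 2. rewrite Mpow_Mvec.
  replace (S n - t')%nat with (S (n - t')) by lia.
  unfold pi. field. lra.
Qed.
End Counts.

Section SingleCopy.
Variables r T : nat.
Variable q : nat -> nat -> R.
Variable nu : nat -> R.
Variables p00 p10 : nat -> R.
Variables e00 e10 f00 f10 : R.
Hypothesis hq01 : forall x z, (x <= r)%nat -> (z <= r - 1)%nat -> 0 <= q x z <= 1.
Hypothesis hqsum : forall z, (z <= r - 1)%nat -> rsum (S r) (fun x => q x z) = 1.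
Hypothesis hnu0 : forall x, (x <= r)%nat -> 0 <= nu x.
Hypothesis hnu1 : rsum (S r) nu = 1.
Hypothesis hp00 : forall n, 0 <= p00 n.
Hypothesis hp10 : forall n, 0 <= p10 n.
Hypothesis hp00s : has_sum p00 1.
Hypothesis hp10s : has_sum p10 1.
Hypothesis he00 : has_sum (fun n => p00 n * INR n) e00.
Hypothesis he10 : has_sum (fun n => p10 n * INR n) e10.
Hypothesis hf00 : has_sum (fun n => p00 n * INR n ^ 2) f00.
Hypothesis hf10 : has_sum (fun n => p10 n * INR n ^ 2) f10.
Hypothesis hq00 : 0 < q O O < 1.

Let P := Pcopy r T q nu p00 p10.
Let Y := Ycopy r T.

Lemma copy_count_moment t0 t1 :
  has_sum (fun a => P a * obs_weight (count_weight t0 t1) T (proj1_sig a))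
    (rsum (S r) (Fc r q nu e00 e10 f00 f10 t0 t1 T)).
Proof.
  pose proof (forward_sum r q nu p00 p10 hq01 hnu0 hp00 hp10 (count_weight t0 t1)
    (count_mean e00 f00 t0 t1) (count_mean e10 f10 t0 t1) (count_weight_nonneg t0 t1)
    (count_mean_sum p00 e00 f00 hp00s he00 hf00 t0 t1)
    (count_mean_sum p10 e10 f10 hp10s he10 hf10 t0 t1) T (fun _ => 1)) as H.
  eapply has_sum_eq; [| eapply has_sum_ext; [| apply H; intros; lra]].
  - apply rsum_ext; intros. unfold Fc. ring.
  - intros a. unfold P, Pcopy. ring.
Qed.

Lemma in_window t : (1 <= t <= T)%nat -> andb (Nat.leb 1 t) (Nat.leb t T) = true.
Proof. intros Ht. apply Bool.andb_true_iff; split; apply Nat.leb_le; lia. Qed.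

Lemma copy_mass : has_sum P 1.
Proof.
  rewrite <- (Fc_mass_none r q nu e00 e10 f00 f10 hqsum T hnu1).
  eapply has_sum_ext; [| apply (copy_count_moment O O)].
  intros a; cbv beta. rewrite obs_weight_count. simpl. ring.
Qed.

Lemma copy_mean t : (1 <= t <= T)%nat ->
  has_sum (fun a => P a * Y t a) (theta1 (q O O) e00 e10 * pi r q nu t).
Proof.
  intros Ht. unfold theta1.
  rewrite <- (Fc_mass_single r q nu e00 e10 f00 f10 hqsum hq00 e00 e10 t O t T);
    try (intros; lia); auto.
  - eapply has_sum_ext; [| apply (copy_count_moment t O)].
    intros a; cbv beta. rewrite obs_weight_count, in_window by auto. simpl. unfold Y, Ycopy. ring.
  - unfold count_mean. rewrite Nat.eqb_refl.
    replace (Nat.eqb t 0) with false by (symmetry; apply Nat.eqb_neq; lia). auto.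
  - unfold count_mean. rewrite Nat.eqb_refl.
    replace (Nat.eqb t 0) with false by (symmetry; apply Nat.eqb_neq; lia). auto.
Qed.

Lemma copy_square t : (1 <= t <= T)%nat ->
  has_sum (fun a => P a * (Y t a * Y t a)) ((q O O * f00 + (1 - q O O) * f10) * pi r q nu t).
Proof.
  intros Ht.
  rewrite <- (Fc_mass_single r q nu e00 e10 f00 f10 hqsum hq00 f00 f10 t t t T);
    try (intros; lia); try (unfold count_mean; rewrite Nat.eqb_refl); auto.
  eapply has_sum_ext; [| apply (copy_count_moment t t)].
  intros a; cbv beta. rewrite obs_weight_count, in_window by auto. unfold Y, Ycopy. ring.
Qed.

(* E[Y_t Y_t'] for t' < t: emission at t' followed by t - t' steps from the
   emission state. *)
Lemma copy_cross t t' : (1 <= t')%nat -> (t' < t)%nat -> (t <= T)%nat ->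
  has_sum (fun a => P a * (Y t a * Y t' a))
    (theta1 (q O O) e00 e10 * pi r q nu t' *
     ((e00 - e10) * q O O * pi r q e0 (t - t') + e10 * pi r q e0 (S (t - t')))).
Proof.
  intros H1 H2 H3. rewrite <- (Fc_mass_pair r q nu e00 e10 f00 f10 hqsum hq00 t t' T) by auto.
  eapply has_sum_ext; [| apply (copy_count_moment t t')].
  intros a; cbv beta. rewrite obs_weight_count, !in_window by lia. unfold Y, Ycopy. ring.
Qed.
End SingleCopy.

Section Spectral.
Variable r : nat.
Variable q : nat -> nat -> R.
Variables V W : nat -> nat -> Cx.
Variable lam : nat -> Cx.
Hypothesis hVW : forall i j, (i <= r)%nat -> (j <= r)%nat ->
  csum (S r) (fun k => Cmul (V i k) (W k j)) = RtoC (delta i j).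
Hypothesis hWV : forall i j, (i <= r)%nat -> (j <= r)%nat ->
  csum (S r) (fun k => Cmul (W i k) (V k j)) = RtoC (delta i j).
Hypothesis hM : forall i j, (i <= r)%nat -> (j <= r)%nat ->
  RtoC (Mfull q r i j) = csum (S r) (fun k => Cmul (Cmul (V i k) (lam k)) (W k j)).

Lemma Mvec_Mfull u x : Mvec r q u x = rsum (S r) (fun z => Mfull q r x z * u z).
Proof.
  unfold Mvec, Mlvec, Mfull.
  rewrite (rsum_ext _ _ (fun x' => rsum (S r) (fun z => Ms q x x' * Ml q r x' z * u z))).
  2:{ intros; rewrite <- rsum_scal; apply rsum_ext; intros; ring. }
  rewrite rsum_swap. apply rsum_ext; intros. rewrite rsum_scal_r. auto.
Qed.

Definition Wvec (u : nat -> R) (k : nat) : Cx := csum (S r) (fun j => Cmul (W k j) (RtoC (u j))).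

Lemma Mpow_spectral n u x : (x <= r)%nat ->
  RtoC (Mpow r q n u x) = csum (S r) (fun k => Cmul (Cmul (V x k) (Cpow (lam k) n)) (Wvec u k)).
Proof.
  revert x; induction n as [| n IH]; intros x Hx; cbn [Mpow]; unfold Wvec.
  - (* V W = I *)
    rewrite (csum_ext _ _ (fun k => csum (S r) (fun j =>
               Cmul (Cmul (V x k) (W k j)) (RtoC (u j))))).
    2:{ intros k _. simpl Cpow. rewrite <- csum_scal. apply csum_ext; intros; ring. }
    rewrite csum_swap.
    rewrite (csum_ext _ _ (fun j => Cmul (RtoC (delta j x)) (RtoC (u j)))).
    2:{ intros j Hj. rewrite (csum_ext _ _ (fun k => Cmul (RtoC (u j)) (Cmul (V x k) (W k j))))
          by (intros; ring).
        rewrite csum_scal, hVW by lia. unfold delta. rewrite Nat.eqb_sym. ring. }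
    rewrite csum_delta by lia. auto.
  - (* M (V Lambda^n W u) = V Lambda^{n+1} W u, using W V = I *)
    rewrite Mvec_Mfull, RtoC_rsum.
    rewrite (csum_ext _ _ (fun z => csum (S r) (fun k => csum (S r) (fun l =>
        Cmul (Cmul (Cmul (Cmul (V x k) (lam k)) (Cmul (Cpow (lam l) n) (Wvec u l))) (V z l))
             (W k z))))).
    2:{ intros z Hz. rewrite RtoC_mult, hM, IH by lia. rewrite csum_mul.
        apply csum_ext; intros k _. apply csum_ext; intros l _. unfold Wvec. ring. }
    rewrite csum_swap. apply csum_ext; intros k Hk. rewrite csum_swap.
    rewrite (csum_ext _ _ (fun l => Cmul (RtoC (delta l k))
               (Cmul (Cmul (V x k) (lam k)) (Cmul (Cpow (lam l) n) (Wvec u l))))).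
    2:{ intros l Hl.
        rewrite (csum_ext _ _ (fun z => Cmul (Cmul (Cmul (V x k) (lam k))
                   (Cmul (Cpow (lam l) n) (Wvec u l))) (Cmul (W k z) (V z l)))) by (intros; ring).
        rewrite csum_scal, hWV by lia. unfold delta. rewrite Nat.eqb_sym. ring. }
    rewrite csum_delta by lia. unfold Wvec. simpl Cpow. ring.
Qed.

Lemma spectral_pi u t : (1 <= t)%nat ->
  csum (S r) (fun x => Cmul (Cmul (Cmul (V O x) (Cmul (lam x) (RtoC (/ q O O)))) (Wvec u x))
                            (Cpow (lam x) (t - 1)))
  = RtoC (pi r q u t).
Proof.
  intros Ht. destruct t as [| n]; [lia |]. replace (S n - 1)%nat with n by lia.
  rewrite (csum_ext _ _ (fun x => Cmul (RtoC (/ q O O))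
             (Cmul (Cmul (V O x) (Cpow (lam x) (S n))) (Wvec u x))))
    by (intros; simpl Cpow; ring).
  rewrite csum_scal, <- Mpow_spectral by lia. unfold pi. apply Cx_ext; simpl; unfold Rdiv; ring.
Qed.

Lemma mu_pi m th nu t : (1 <= t)%nat ->
  mu r m th (q O O) nu V W lam t = RtoC (INR m * (th * pi r q nu t)).
Proof.
  intros Ht. unfold mu, alpha. rewrite !RtoC_mult, <- (spectral_pi nu t Ht).
  unfold Wvec. ring.
Qed.

Lemma Wvec_e0 k : Wvec e0 k = W k O.
Proof.
  unfold Wvec, e0. rewrite (csum_ext _ _ (fun j => Cmul (RtoC (delta j O)) (W k j)))
    by (intros; ring).
  apply csum_delta; lia.
Qed.

Lemma mu0_pi m th t : (1 <= t)%nat ->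
  mu0 r m th (q O O) V W lam t = RtoC (INR m * (th * pi r q e0 t)).
Proof.
  intros Ht. unfold mu0, alpha0.
  rewrite (csum_ext _ _ (fun x => Cmul (Cmul (Cmul (V O x) (Cmul (lam x) (RtoC (/ q O O))))
                                          (Wvec e0 x)) (Cpow (lam x) (t - 1))))
    by (intros; rewrite Wvec_e0; ring).
  rewrite spectral_pi, !RtoC_mult by auto. ring.
Qed.

(* Splitting nu = nu_0 e0 + (1 - nu_0) nu' splits alpha accordingly. *)
Lemma alpha_split nu x : nu O < 1 ->
  alpha r (q O O) nu V W lam x =
  Cadd (Cmul (RtoC (nu O)) (alpha0 (q O O) V W lam x))
       (Cmul (RtoC (1 - nu O)) (alpha1 r (q O O) nu V W lam x)).
Proof.
  intros Hn. unfold alpha, alpha0, alpha1.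
  rewrite (csum_ext _ _ (fun z => Cadd (Cmul (RtoC (nu O)) (Cmul (RtoC (delta z O)) (W x z)))
                              (Cmul (RtoC (1 - nu O)) (Cmul (W x z) (RtoC (nu' nu z)))))).
  2:{ intros z _. unfold nu', delta. destruct (Nat.eqb_spec z 0).
      - subst. apply Cx_ext; simpl; ring.
      - apply Cx_ext; simpl; field; lra. }
  rewrite csum_plus, csum_scal, csum_scal, csum_delta by lia. ring.
Qed.

(* Column r of V is e_r, so V_0r = 0 and the term x = r of mu_t vanishes. *)
Lemma mu_split m th nu t :
  (1 <= r)%nat -> (forall i, (i <= r)%nat -> V i r = RtoC (delta i r)) -> nu O < 1 ->
  mu r m th (q O O) nu V W lam t =
  Cmul (RtoC (INR m * th))
    (csum r (fun x => Cmul (Cadd (Cmul (RtoC (nu O)) (alpha0 (q O O) V W lam x))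
                                 (Cmul (RtoC (1 - nu O)) (alpha1 r (q O O) nu V W lam x)))
                           (Cpow (lam x) (t - 1)))).
Proof.
  intros hr hVr Hn. unfold mu. f_equal. change (csum (S r) ?f) with (Cadd (csum r f) (f r)).
  unfold alpha at 2. rewrite hVr by lia. unfold delta at 1.
  replace (Nat.eqb 0 r) with false by (symmetry; apply Nat.eqb_neq; lia).
  rewrite (csum_ext r _ (fun x => Cmul (Cadd (Cmul (RtoC (nu O)) (alpha0 (q O O) V W lam x))
      (Cmul (RtoC (1 - nu O)) (alpha1 r (q O O) nu V W lam x))) (Cpow (lam x) (t - 1))))
    by (intros; rewrite alpha_split; auto).
  ring.
Qed.
End Spectral.

Theorem mainTheorem6
  (r T m : nat) (q : nat -> nat -> R) (nu : nat -> R) (p00 p10 : nat -> R)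
  (e00 e10 f00 f10 : R) (V W : nat -> nat -> Cx) (lam : nat -> Cx)
  (hr : (1 <= r)%nat) (hT : (1 <= T)%nat) (hm : (1 <= m)%nat)
  (hq01 : forall x z, (x <= r)%nat -> (z <= r - 1)%nat -> 0 <= q x z <= 1)
  (hqsum : forall z, (z <= r - 1)%nat -> rsum (S r) (fun x => q x z) = 1)
  (hnu0 : forall x, (x <= r)%nat -> 0 <= nu x)
  (hnu1 : rsum (S r) nu = 1)
  (hp00 : forall n, 0 <= p00 n) (hp00s : has_sum p00 1)
  (hp10 : forall n, 0 <= p10 n) (hp10s : has_sum p10 1)
  (he00 : has_sum (fun n => p00 n * INR n) e00)
  (he10 : has_sum (fun n => p10 n * INR n) e10)
  (hf00 : has_sum (fun n => p00 n * INR n ^ 2) f00)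
  (hf10 : has_sum (fun n => p10 n * INR n ^ 2) f10)
  (hmgf00 : exists eps, 0 < eps /\ forall s, Rabs s < eps ->
              exists L, has_sum (fun n => p00 n * exp (s * INR n)) L)
  (hmgf10 : exists eps, 0 < eps /\ forall s, Rabs s < eps ->
              exists L, has_sum (fun n => p10 n * exp (s * INR n)) L)
  (hq00 : 0 < q 0%nat 0%nat < 1)
  (hth1 : 0 < theta1 (q 0%nat 0%nat) e00 e10)
  (hVW : forall i j, (i <= r)%nat -> (j <= r)%nat ->
           csum (S r) (fun k => Cmul (V i k) (W k j)) = RtoC (delta i j))
  (hWV : forall i j, (i <= r)%nat -> (j <= r)%nat ->
           csum (S r) (fun k => Cmul (W i k) (V k j)) = RtoC (delta i j))
  (hM : forall i j, (i <= r)%nat -> (j <= r)%nat ->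
           RtoC (Mfull q r i j) = csum (S r) (fun k => Cmul (Cmul (V i k) (lam k)) (W k j)))
  (hlamr : lam r = RtoC 1)
  (hVr : forall i, (i <= r)%nat -> V i r = RtoC (delta i r)) :
  let q00 := q 0%nat 0%nat in
  let th1 := theta1 q00 e00 e10 in
  let th2 := theta2 q00 e00 e10 in
  let th3 := theta3 q00 e00 e10 f00 f10 in
  let P := Pm q nu p00 p10 r T m in
  let mu_ := mu r m th1 q00 nu V W lam in
  let mu0_ := mu0 r m th1 q00 V W lam in
  (* expectation *)
  (forall t, (1 <= t <= T)%nat ->
     has_sum (fun w : Omega r T m => P w * Ym t w) (Cre (mu_ t)) /\ Cim (mu_ t) = 0)
  /\
  (* alternative expression of mu_t when nu_0 < 1 *)
  (nu 0%nat < 1 -> forall t, (1 <= t)%nat ->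
     mu_ t = Cmul (RtoC (INR m * th1))
               (csum r (fun x => Cmul (Cadd (Cmul (RtoC (nu 0%nat)) (alpha0 q00 V W lam x))
                                            (Cmul (RtoC (1 - nu 0%nat)) (alpha1 r q00 nu V W lam x)))
                                      (Cpow (lam x) (t - 1)))))
  /\
  (* variance *)
  (forall t, (1 <= t <= T)%nat ->
     let S := Cmul (RtoC (/ INR m))
                (Cmul (Csub (RtoC (INR m * th1 * (th3 + 1) + INR m)) (mu_ t)) (mu_ t)) in
     has_sum (fun w : Omega r T m =>
                P w * ((Ym t w - Cre (mu_ t)) * (Ym t w - Cre (mu_ t)))) (Cre S)
     /\ Cim S = 0)
  /\
  (* covariance *)
  (forall t t', (1 <= t')%nat -> (t' < t)%nat -> (t <= T)%nat ->
     let S := Cmul (RtoC (/ INR m))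
                (Cmul (Csub (Cadd (Cmul (RtoC (th2 - q00 * (1 - th2) / (1 - q00))) (mu0_ (t - t')%nat))
                                  (Cmul (RtoC ((1 - th2) / (1 - q00))) (mu0_ (t - t' + 1)%nat)))
                            (mu_ t))
                      (mu_ t')) in
     has_sum (fun w : Omega r T m =>
                P w * ((Ym t w - Cre (mu_ t)) * (Ym t' w - Cre (mu_ t')))) (Cre S)
     /\ Cim S = 0).
Proof.
  cbv zeta.
  assert (Hm : 0 < INR m) by (apply lt_0_INR; lia).
  set (q00 := q O O) in *. set (th1 := theta1 q00 e00 e10) in *.
  pose proof (copy_mass r T q nu p00 p10 e00 e10 f00 f10 hq01 hqsum hnu0 hnu1 hp00 hp10
                hp00s hp10s he00 he10 hf00 hf10) as One.
  assert (Mean : forall t, (1 <= t <= T)%nat ->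
     has_sum (fun a => Pcopy r T q nu p00 p10 a * Ycopy r T t a) (th1 * pi r q nu t))
    by (intros; eapply copy_mean; eauto).
  assert (MU : forall t, (1 <= t)%nat ->
      mu r m th1 q00 nu V W lam t = RtoC (INR m * (th1 * pi r q nu t)))
    by (intros; apply mu_pi; auto).
  assert (MU0 : forall t, (1 <= t)%nat ->
      mu0 r m th1 q00 V W lam t = RtoC (INR m * (th1 * pi r q e0 t)))
    by (intros; apply mu0_pi; auto).
  split; [| split; [| split]].
  - intros t Ht. rewrite MU by lia.
    split; [apply (copies_mean r T q nu p00 p10); auto | reflexivity].
  - intros Hn t Ht. apply mu_split; auto.
  - intros t Ht. rewrite MU by lia. split; [| simpl; ring].
    eapply has_sum_eq; [| apply (copies_covariance r T q nu p00 p10 hq01 hnu0 hp00 hp10 One);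
      [apply Mean | apply Mean | eapply copy_square]; eauto].
    (* m theta1 (theta3 + 1) + m = m (q00 f00 + (1 - q00) f10) / theta1 *)
    simpl. unfold theta3. fold q00 th1. field. lra.
  - intros t t' H1 H2 H3. rewrite !MU, !MU0 by lia. split; [| simpl; ring].
    eapply has_sum_eq; [| apply (copies_covariance r T q nu p00 p10 hq01 hnu0 hp00 hp10 One);
      [apply Mean | apply Mean | eapply copy_cross]; eauto; lia].
    (* theta2 = q00 e00 / theta1 and 1 - theta2 = (1 - q00) e10 / theta1 *)
    simpl. unfold theta2. fold q00 th1. rewrite Nat.add_1_r. unfold th1, theta1 in *. field. lra.
Qed.
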